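(* Consider the system of three ODEs in the unknowns $(T_0(t),T_2(t),\eta(t))\in\mathbb R^3$: \[ R\dot T_0 = Q\bigl(s_0-\overline{\alpha}_0(\eta)\bigr)-A-BT_0,\qquad R\dot T_2 = Q\bigl(s_2-\overline{\alpha}_2(\eta)\bigr)-(B+6D)T_2,\qquad \dot\eta=\varepsilon\bigl(T_0+T_2\,p_2(\eta)-T_c\bigr), \] with parameter values $Q=343$, $A=202$, $B=1.9$, $\alpha_1=0.32$, $\alpha_2=0.62$, $T_c=-10$, $D=0.35$, any fixed $R>0$, and $\varepsilon>0$. Then, for all sufficiently small $\varepsilon>0$, this system has exactly two equilibrium solutions whose $\eta$-coordinate lies in $[0,1]$, say with $\eta$-coordinates $\eta_1<\eta_2$. The equilibrium with $\eta=\eta_1$ (the larger ice cap) is unstable, and the equilibrium with $\eta=\eta_2$ (the smaller ice cap) is asymptotically stable.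
   Context: $p_0(y)=1$ and $p_2(y)=\tfrac12(3y^2-1)$ are the Legendre polynomials of degree 0 and 2. The insolation distribution is $s(y)=s_0p_0(y)+s_2p_2(y)$ with $s_0=1$, $s_2=-0.477$. Set $q_0(y)=s(y)p_0(y)$, $q_2(y)=s(y)p_2(y)$. For $n=0,1$, define the polynomials in $\eta$ \[ \overline{\alpha}_{2n}(\eta)=\alpha_2 s_{2n}-(4n+1)(\alpha_2-\alpha_1)\int_0^\eta q_{2n}(y)\,dy . \] (These arise from the albedo $\alpha(y,\eta)=\alpha_1$ for $y<\eta$, $\alpha_2$ for $y>\eta$, with $\overline{\alpha}_{2n}(\eta)=(4n+1)\int_0^1\alpha(y,\eta)q_{2n}(y)\,dy$.) The variable $\eta$ (the ice line, $y=\sin(\text{latitude})$) is interpreted so that smaller $\eta$ means a larger ice cap. *)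

From Stdlib Require Import Reals Lra.
Open Scope R_scope.

Definition p0 (y : R) : R := 1.
Definition p2 (y : R) : R := (3 * y ^ 2 - 1) / 2.
Definition s0 : R := 1.
Definition s2 : R := -0.477.
Definition s (y : R) : R := s0 * p0 y + s2 * p2 y.
Definition q0 (y : R) : R := s y * p0 y.
Definition q2 (y : R) : R := s y * p2 y.

(* Explicit antiderivatives: Iq0 eta = int_0^eta q0(y) dy,
   Iq2 eta = int_0^eta q2(y) dy (q0, q2 are polynomials).
   int_0^eta p2 = (eta^3 - eta)/2,
   int_0^eta p2^2 = (9 eta^5/5 - 2 eta^3 + eta)/4. *)
Definition Iq0 (eta : R) : R := s0 * eta + s2 * ((eta ^ 3 - eta) / 2).
Definition Iq2 (eta : R) : R :=
  s0 * ((eta ^ 3 - eta) / 2) + s2 * ((9 / 5 * eta ^ 5 - 2 * eta ^ 3 + eta) / 4).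


Definition Qc : R := 343.
Definition Ac : R := 202.
Definition Bc : R := 1.9.
Definition alpha1 : R := 0.32.
Definition alpha2 : R := 0.62.
Definition Tc : R := -10.
Definition Dc : R := 0.35.

(* alpha-bar_{2n}(eta) = alpha2 s_{2n} - (4n+1)(alpha2 - alpha1) int_0^eta q_{2n} *)
Definition alphabar0 (eta : R) : R := alpha2 * s0 - 1 * (alpha2 - alpha1) * Iq0 eta.
Definition alphabar2 (eta : R) : R := alpha2 * s2 - 5 * (alpha2 - alpha1) * Iq2 eta.

Definition state : Type := (R * R * R)%type.
Definition T0_of (x : state) : R := fst (fst x).
Definition T2_of (x : state) : R := snd (fst x).
Definition eta_of (x : state) : R := snd x.

Definition rhs_T0 (Rr : R) (x : state) : R :=
  (Qc * (s0 - alphabar0 (eta_of x)) - Ac - Bc * T0_of x) / Rr.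
Definition rhs_T2 (Rr : R) (x : state) : R :=
  (Qc * (s2 - alphabar2 (eta_of x)) - (Bc + 6 * Dc) * T2_of x) / Rr.
Definition rhs_eta (eps : R) (x : state) : R :=
  eps * (T0_of x + T2_of x * p2 (eta_of x) - Tc).

Definition is_equilibrium (Rr eps : R) (x : state) : Prop :=
  rhs_T0 Rr x = 0 /\ rhs_T2 Rr x = 0 /\ rhs_eta eps x = 0.

Definition dist3 (x y : state) : R :=
  Rmax (Rabs (T0_of x - T0_of y))
       (Rmax (Rabs (T2_of x - T2_of y)) (Rabs (eta_of x - eta_of y))).

Definition is_solution_on (Rr eps : R) (x : R -> state) (Tm : R) : Prop :=
  (forall t, 0 < t < Tm ->
     derivable_pt_lim (fun u => T0_of (x u)) t (rhs_T0 Rr (x t)) /\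
     derivable_pt_lim (fun u => T2_of (x u)) t (rhs_T2 Rr (x t)) /\
     derivable_pt_lim (fun u => eta_of (x u)) t (rhs_eta eps (x t))) /\
  (forall e, 0 < e -> exists d, 0 < d /\
     forall t, 0 <= t < d -> t < Tm -> dist3 (x t) (x 0) < e).

Definition is_global_solution (Rr eps : R) (x : R -> state) : Prop :=
  forall Tm, 0 < Tm -> is_solution_on Rr eps x Tm.

Definition lyapunov_stable (Rr eps : R) (p : state) : Prop :=
  forall e, 0 < e -> exists d, 0 < d /\
    forall (x : R -> state) (Tm : R), is_solution_on Rr eps x Tm ->
      dist3 (x 0) p < d ->
      forall t, 0 <= t < Tm -> dist3 (x t) p < e.

Definition asymptotically_stable (Rr eps : R) (p : state) : Prop :=
  lyapunov_stable Rr eps p /\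
  exists d, 0 < d /\
    forall x : R -> state, is_global_solution Rr eps x ->
      dist3 (x 0) p < d ->
      forall e, 0 < e -> exists t0, forall t, t0 <= t -> dist3 (x t) p < e.

Definition unstable (Rr eps : R) (p : state) : Prop :=
  ~ lyapunov_stable Rr eps p.

From Stdlib Require Import Reals Lra Psatz Classical.
From Coquelicot Require Import Coquelicot.
Open Scope R_scope.

(* On the slow manifold T0 = phi0(eta), T2 = phi2(eta) the eta-equation reads
   eta' = eps * h_slow(eta) for an explicit polynomial of degree 7, and the equilibria with
   eta in [0, 1] are the points of the manifold over its two roots there, one near 0.21 where
   h_slow' >= 50 and one near 0.84 where h_slow' <= -15.  For small eps the fast variables
   relax to the manifold at rate ~ 1/R while eta moves at rate eps, so near the upper root
   V = |T - phi(eta)|^2 + (eta - eta2)^2 decays exponentially, while near the lower root the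
   Chetaev function P = (eta - eta1)^2 - |T - phi(eta)|^2 grows like exp(85 eps t) as long as
   it is positive.  A solution started on the manifold next to eta1 therefore leaves every
   small neighbourhood; it is produced by Picard iteration for a globally Lipschitz truncation
   of the vector field that agrees with it near eta1.  Sign conditions on polynomials are
   certified on intervals through the Bernstein basis. *)

(** * Real analysis *)

Lemma continuity_pt_intro (f : R -> R) x :
  (forall e, 0 < e -> exists d, 0 < d /\ forall y, Rabs (y - x) < d -> Rabs (f y - f x) < e) ->
  continuity_pt f x.
Proof.
  intros H e He. destruct (H e He) as [d [Hd Hy]].
  exists d; split; [lra|]. intros y [_ Hyd]. exact (Hy y Hyd).
Qed.

Lemma continuity_pt_elim (f : R -> R) x : continuity_pt f x ->
  forall e, 0 < e -> exists d, 0 < d /\ forall y, Rabs (y - x) < d -> Rabs (f y - f x) < e.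
Proof.
  intros H e He. destruct (H e He) as [d [Hd Hy]].
  exists d; split; [lra|]. intros y Hyx.
  destruct (Req_dec y x) as [->|Hne].
  - rewrite Rminus_diag, Rabs_R0. lra.
  - apply (Hy y). split; [split; [exact I|auto]|exact Hyx].
Qed.

Lemma is_derive_continuity_pt (f : R -> R) x l : is_derive f x l -> continuity_pt f x.
Proof.
  intro H. apply derivable_continuous_pt. exists l. apply is_derive_Reals. exact H.
Qed.

Lemma lt_Rmin x y z : z < Rmin x y -> z < x /\ z < y.
Proof. intros H. pose proof (Rmin_l x y). pose proof (Rmin_r x y). lra. Qed.

Section RealDerivatives.
Variables (f g : R -> R) (t a b : R).
Hypotheses (Hf : is_derive f t a) (Hg : is_derive g t b).

Lemma is_derive_Rplus : is_derive (fun s => f s + g s) t (a + b).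
Proof. exact (is_derive_plus f g t a b Hf Hg). Qed.

Lemma is_derive_Rminus : is_derive (fun s => f s - g s) t (a - b).
Proof. exact (is_derive_minus f g t a b Hf Hg). Qed.

Lemma is_derive_Rmult : is_derive (fun s => f s * g s) t (a * g t + f t * b).
Proof. exact (is_derive_mult f g t a b Hf Hg Rmult_comm). Qed.

Lemma is_derive_Rsqr : is_derive (fun s => (f s) ^ 2) t (2 * f t * a).
Proof.
  apply (is_derive_ext (fun s => f s * f s)); [intros; simpl; ring|].
  replace (2 * f t * a) with (a * f t + f t * a) by ring.
  exact (is_derive_mult f f t a a Hf Hf Rmult_comm).
Qed.

End RealDerivatives.

Lemma is_derive_Rconst (c x : R) : is_derive (fun _ : R => c) x 0.
Proof. exact (is_derive_const (K:=R_AbsRing) (V:=R_NormedModule) c x). Qed.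

Lemma is_derive_Rcomp (g f : R -> R) (t dg df : R) :
  is_derive g (f t) dg -> is_derive f t df -> is_derive (fun s => g (f s)) t (dg * df).
Proof.
  intros H1 H2. replace (dg * df) with (scal df dg) by (unfold scal; simpl; unfold mult; simpl; ring).
  exact (is_derive_comp g f t dg df H1 H2).
Qed.

Lemma is_derive_exp_scal (k t : R) : is_derive (fun s => exp (k * s)) t (exp (k * t) * k).
Proof. auto_derive; auto; ring. Qed.

Lemma is_derive_exp_scal_mult (g : R -> R) (k t dg : R) : is_derive g t dg ->
  is_derive (fun s => exp (k * s) * g s) t (exp (k * t) * (k * g t + dg)).
Proof.
  intro H. replace (exp (k * t) * (k * g t + dg)) with (exp (k * t) * k * g t + exp (k * t) * dg) by ring.
  exact (is_derive_Rmult _ g t _ _ (is_derive_exp_scal k t) H).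
Qed.

Lemma ge0_of_derive_ge0 (g dg : R -> R) t : 0 <= t -> g 0 = 0 ->
  (forall s, 0 <= s <= t -> is_derive g s (dg s)) ->
  (forall s, 0 <= s <= t -> 0 <= dg s) -> 0 <= g t.
Proof.
  intros Ht Hg0 Hd Hpos. destruct (Req_dec t 0) as [->|Htn]; [lra|].
  destruct (MVT_cor2 g dg 0 t) as [c [Heq Hc]]; [lra|intros c Hc; apply is_derive_Reals, Hd; lra|].
  specialize (Hpos c ltac:(lra)). rewrite Hg0 in Heq. nra.
Qed.

Lemma Rabs_le_of_derive_Rabs_le (e de G dG : R -> R) t :
  0 <= t -> e 0 = 0 -> G 0 = 0 ->
  (forall s, 0 <= s <= t -> is_derive e s (de s)) ->
  (forall s, 0 <= s <= t -> is_derive G s (dG s)) ->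
  (forall s, 0 <= s <= t -> Rabs (de s) <= dG s) ->
  Rabs (e t) <= G t.
Proof.
  intros Ht He0 HG0 De DG Hb.
  assert (Hm : 0 <= G t - e t).
  { apply (ge0_of_derive_ge0 (fun s => G s - e s) (fun s => dG s - de s)); auto.
    - rewrite He0, HG0; ring.
    - intros s Hs. apply is_derive_Rminus; auto.
    - intros s Hs. specialize (Hb s Hs). apply Rabs_le_between in Hb. lra. }
  assert (Hp : 0 <= G t + e t).
  { apply (ge0_of_derive_ge0 (fun s => G s + e s) (fun s => dG s + de s)); auto.
    - rewrite He0, HG0; ring.
    - intros s Hs. apply is_derive_Rplus; auto.
    - intros s Hs. specialize (Hb s Hs). apply Rabs_le_between in Hb. lra. }
  apply Rabs_le. lra.
Qed.

Lemma MVT_in_interval (f df : R -> R) a b x y :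
  (forall z, a <= z <= b -> is_derive f z (df z)) -> a <= x <= b -> a <= y <= b ->
  exists c, a <= c <= b /\ f y - f x = df c * (y - x).
Proof.
  intros Hd Hx Hy.
  assert (H1 : a <= Rmin x y) by (apply Rmin_glb; lra).
  assert (H2 : Rmax x y <= b) by (apply Rmax_lub; lra).
  destruct (MVT_gen f x y df) as [c [Hc Heq]].
  - intros z Hz. apply Hd. lra.
  - intros z Hz. eapply is_derive_continuity_pt. apply Hd. lra.
  - exists c. split; [lra|exact Heq].
Qed.

Lemma lipschitz_of_derive_bounded (f df : R -> R) a b K :
  (forall z, a <= z <= b -> is_derive f z (df z)) ->
  (forall z, a <= z <= b -> Rabs (df z) <= K) ->
  forall x y, a <= x <= b -> a <= y <= b -> Rabs (f x - f y) <= K * Rabs (x - y).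
Proof.
  intros Hd Hb x y Hx Hy. destruct (MVT_in_interval f df a b y x Hd Hy Hx) as [c [Hc Heq]].
  rewrite Heq, Rabs_mult. apply Rmult_le_compat_r; [apply Rabs_pos|]. apply Hb; auto.
Qed.

Lemma is_derive_pow_div_fact (n : nat) (a s : R) :
  is_derive (fun s => a * s ^ S n / INR (Factorial.fact (S n))) s (a * s ^ n / INR (Factorial.fact n)).
Proof.
  assert (Hf : INR (Factorial.fact n) <> 0) by (apply not_0_INR, Factorial.fact_neq_0).
  auto_derive; auto.
  replace (match n with 0%nat => 1 | S _ => INR n + 1 end) with (INR n + 1) by (destruct n; simpl; ring).
  rewrite plus_INR, mult_INR. pose proof (pos_INR n).
  field. split; auto.
  replace (INR (Factorial.fact n) + INR n * INR (Factorial.fact n)) with (INR (Factorial.fact n) * (INR n + 1)) by ring.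
  apply Rmult_integral_contrapositive_currified; auto; lra.
Qed.

Lemma pow_div_fact_le_exp (n : nat) (x : R) : 0 <= x -> x ^ n / INR (Factorial.fact n) <= exp x.
Proof.
  revert x. induction n as [|n IH]; intros x Hx.
  - simpl. rewrite Rdiv_1_r. pose proof (exp_ineq1_le x). lra.
  - assert (H : 0 <= exp x - 1 - 1 * x ^ S n / INR (Factorial.fact (S n))).
    { apply (ge0_of_derive_ge0 (fun s => exp s - 1 - 1 * s ^ S n / INR (Factorial.fact (S n)))
        (fun s => exp s - 1 * s ^ n / INR (Factorial.fact n))); auto.
      - rewrite exp_0. simpl. unfold Rdiv. ring.
      - intros s _. apply is_derive_Rminus; [|apply is_derive_pow_div_fact].
        auto_derive; auto; ring.
      - intros s Hs. rewrite Rmult_1_l. specialize (IH s ltac:(lra)). lra. }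
    pose proof (exp_pos x). lra.
Qed.

Lemma pow_div_fact_le_geometric C M t T n : 0 <= C -> 0 <= M -> 0 <= t <= T ->
  C * M ^ n * t ^ S n / INR (Factorial.fact (S n)) <= C * t * exp (2 * M * T) * (/2) ^ n.
Proof.
  intros HC HM Ht.
  assert (Hf : 0 < INR (Factorial.fact n)) by apply INR_fact_lt_0.
  assert (Hf2 : INR (Factorial.fact n) <= INR (Factorial.fact (S n))).
  { rewrite fact_simpl, mult_INR, S_INR. pose proof (pos_INR n). nra. }
  assert (Htn : t ^ n <= T ^ n) by (apply pow_incr; lra).
  assert (HE := pow_div_fact_le_exp n (2 * M * T) ltac:(nra)).
  rewrite !Rpow_mult_distr in HE.
  assert (P1 : 0 <= M ^ n) by (apply pow_le; lra).
  assert (P2 : 0 <= t ^ n) by (apply pow_le; lra).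
  assert (Hinv : (/2) ^ n * 2 ^ n = 1) by (rewrite <- Rpow_mult_distr, Rinv_l, pow1; lra).
  apply Rle_trans with (C * t * (M ^ n * T ^ n / INR (Factorial.fact n))).
  - change (t ^ S n) with (t * t ^ n). unfold Rdiv.
    apply Rle_trans with (C * t * (M ^ n * t ^ n) * / INR (Factorial.fact n)).
    + replace (C * M ^ n * (t * t ^ n) * / INR (Factorial.fact (S n)))
        with (C * t * (M ^ n * t ^ n) * / INR (Factorial.fact (S n))) by ring.
      apply Rmult_le_compat_l; [repeat apply Rmult_le_pos; lra|].
      apply Rinv_le_contravar; lra.
    + replace (C * t * (M ^ n * T ^ n * / INR (Factorial.fact n)))
        with (C * t * (M ^ n * T ^ n) * / INR (Factorial.fact n)) by ring.
      apply Rmult_le_compat_r; [left; apply Rinv_0_lt_compat; lra|].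
      apply Rmult_le_compat_l; [apply Rmult_le_pos; lra|]. apply Rmult_le_compat_l; lra.
  - replace (C * t * exp (2 * M * T) * (/2) ^ n) with (C * t * (exp (2 * M * T) * (/2) ^ n)) by ring.
    apply Rmult_le_compat_l; [apply Rmult_le_pos; lra|].
    replace (M ^ n * T ^ n / INR (Factorial.fact n))
      with (2 ^ n * M ^ n * T ^ n / INR (Factorial.fact n) * (/2) ^ n)
      by (transitivity (((/2) ^ n * 2 ^ n) * (M ^ n * T ^ n / INR (Factorial.fact n))); [unfold Rdiv; ring|rewrite Hinv; ring]).
    apply Rmult_le_compat_r; [apply pow_le; lra|exact HE].
Qed.

Lemma geometric_increments_tail (u : nat -> R) K :
  (forall n, Rabs (u (S n) - u n) <= K * (/2) ^ n) ->
  forall n m, Rabs (u (n + m)%nat - u n) <= 2 * K * (/2) ^ n * (1 - (/2) ^ m).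
Proof.
  intros H n m. induction m as [|m IH].
  - rewrite Nat.add_0_r, Rminus_diag, Rabs_R0. simpl; lra.
  - replace (n + S m)%nat with (S (n + m)) by lia.
    replace (u (S (n + m)) - u n) with ((u (S (n + m)) - u (n + m)%nat) + (u (n + m)%nat - u n)) by ring.
    eapply Rle_trans; [apply Rabs_triang|].
    specialize (H (n + m)%nat). rewrite pow_add in H. simpl. nra.
Qed.

Lemma geometric_increments_converge (u : nat -> R) K :
  (forall n, Rabs (u (S n) - u n) <= K * (/2) ^ n) ->
  exists l, Un_cv u l /\ forall n, Rabs (l - u n) <= 2 * K * (/2) ^ n.
Proof.
  intros H.
  assert (HK : 0 <= K) by (specialize (H 0%nat); simpl in H; pose proof (Rabs_pos (u 1%nat - u 0%nat)); lra).
  assert (Hq : forall n, 0 < (/2) ^ n) by (intros; apply pow_lt; lra).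
  assert (Hb : forall n m, (n <= m)%nat -> Rabs (u m - u n) <= 2 * K * (/2) ^ n).
  { intros n m Hnm. replace m with (n + (m - n))%nat by lia.
    eapply Rle_trans; [apply geometric_increments_tail, H|].
    pose proof (Hq (m - n)%nat). pose proof (Hq n).
    assert (0 <= 2 * K * (/2) ^ n * (/2) ^ (m - n)) by (repeat apply Rmult_le_pos; lra). lra. }
  assert (Hc : Cauchy_crit u).
  { intros e He.
    destruct (pow_lt_1_zero (/2) ltac:(rewrite Rabs_pos_eq; lra) (e / (4 * K + 1))) as [N HN].
    { apply Rdiv_lt_0_compat; lra. }
    exists N. intros n m Hn Hm. unfold R_dist.
    specialize (HN N (Nat.le_refl N)). rewrite Rabs_pos_eq in HN by (left; apply Hq).
    pose proof (Hb N n Hn). pose proof (Hb N m Hm).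
    replace (u n - u m) with ((u n - u N) - (u m - u N)) by ring.
    eapply Rle_lt_trans; [apply Rabs_triang|]. rewrite Rabs_Ropp.
    assert (HN' : (4 * K + 1) * (/2) ^ N < e).
    { apply (Rmult_lt_compat_l (4 * K + 1)) in HN; [|lra].
      replace ((4 * K + 1) * (e / (4 * K + 1))) with e in HN by (field; lra). lra. }
    pose proof (Hq N). nra. }
  destruct (Rcomplete.R_complete u Hc) as [l Hl]. exists l. split; auto.
  intro n. apply Rnot_lt_le. intro Hlt.
  destruct (Hl (Rabs (l - u n) - 2 * K * (/2) ^ n) ltac:(lra)) as [N HN].
  specialize (HN (max N n) (Nat.le_max_l N n)). unfold R_dist in HN.
  specialize (Hb n (max N n) (Nat.le_max_r N n)).
  pose proof (Rabs_triang (-(u (max N n) - l)) (u (max N n) - u n)) as Htri.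
  rewrite Rabs_Ropp in Htri.
  replace (-(u (max N n) - l) + (u (max N n) - u n)) with (l - u n) in Htri by ring. lra.
Qed.

(** * Picard iteration *)

Inductive axis := axis0 | axis1 | axis2.

Definition coord (i : axis) (v : state) : R :=
  match i with axis0 => T0_of v | axis1 => T2_of v | axis2 => eta_of v end.

Definition of_coords (f : axis -> R) : state := (f axis0, f axis1, f axis2).

Lemma coord_of_coords i f : coord i (of_coords f) = f i.
Proof. destruct i; reflexivity. Qed.

Lemma of_coords_coord v : of_coords (fun i => coord i v) = v.
Proof. destruct v as [[a b] c]; reflexivity. Qed.

Definition l1_dist (u v : state) : R :=
  Rabs (coord axis0 u - coord axis0 v) + Rabs (coord axis1 u - coord axis1 v)
  + Rabs (coord axis2 u - coord axis2 v).

Definition lipschitz (F : axis -> state -> R) (L : R) :=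
  forall i u v, Rabs (F i u - F i v) <= L * l1_dist u v.

Lemma lipschitz_continuity_pt F L (g : R -> state) t i : 0 <= L -> lipschitz F L ->
  (forall j, continuity_pt (fun s => coord j (g s)) t) ->
  continuity_pt (fun s => F i (g s)) t.
Proof.
  intros HL HF Hc. apply continuity_pt_intro. intros e He.
  set (e' := e / (3 * (L + 1))).
  assert (He' : 0 < e') by (unfold e'; apply Rdiv_lt_0_compat; lra).
  destruct (continuity_pt_elim _ _ (Hc axis0) e' He') as [d0 [Hd0 H0]].
  destruct (continuity_pt_elim _ _ (Hc axis1) e' He') as [d1 [Hd1 H1]].
  destruct (continuity_pt_elim _ _ (Hc axis2) e' He') as [d2 [Hd2 H2]].
  exists (Rmin d0 (Rmin d1 d2)). split; [repeat apply Rmin_pos; auto|].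
  intros y Hy. apply lt_Rmin in Hy as [Hy0 Hy]. apply lt_Rmin in Hy as [Hy1 Hy2].
  specialize (H0 y ltac:(lra)). specialize (H1 y ltac:(lra)). specialize (H2 y ltac:(lra)).
  eapply Rle_lt_trans; [apply HF|]. unfold l1_dist.
  assert (E : (L + 1) * (3 * e') = e) by (unfold e'; field; lra).
  assert (L * (Rabs (coord axis0 (g y) - coord axis0 (g t)) + Rabs (coord axis1 (g y) - coord axis1 (g t))
     + Rabs (coord axis2 (g y) - coord axis2 (g t))) <= L * (3 * e')) by (apply Rmult_le_compat_l; lra).
  nra.
Qed.

Section PicardLindelof.

Variables (F : axis -> state -> R) (L : R) (y0 : state).
Hypotheses (L_ge0 : 0 <= L) (F_lip : lipschitz F L).

Fixpoint picard (n : nat) (t : R) : state :=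
  match n with
  | O => y0
  | S m => of_coords (fun i => coord i y0 + RInt (fun s => F i (picard m s)) 0 t)
  end.

Lemma picard_at_0 n : picard n 0 = y0.
Proof.
  destruct n; simpl; auto.
  transitivity (of_coords (fun i => coord i y0)); [|apply of_coords_coord].
  unfold of_coords. rewrite !RInt_point. unfold zero; simpl. rewrite !Rplus_0_r. reflexivity.
Qed.

Lemma picard_continuous_derivable n :
  (forall i t, continuity_pt (fun s => F i (picard n s)) t) /\
  (forall i t, is_derive (fun s => coord i (picard (S n) s)) t (F i (picard n t))).
Proof.
  assert (Hder : forall n, (forall i t, continuity_pt (fun s => F i (picard n s)) t) ->
    forall i t, is_derive (fun s => coord i (picard (S n) s)) t (F i (picard n t))).
  { intros m Hc i t. simpl.
    apply (is_derive_ext (fun s => coord i y0 + RInt (fun s0 => F i (picard m s0)) 0 s));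
      [intros; rewrite coord_of_coords; reflexivity|].
    rewrite <- (Rplus_0_l (F i (picard m t))).
    apply is_derive_Rplus; [apply is_derive_Rconst|].
    apply (is_derive_RInt (fun s0 => F i (picard m s0)) _ 0 t).
    - apply filter_forall. intros b. apply (RInt_correct (V:=R_CompleteNormedModule)).
      apply (ex_RInt_continuous (V:=R_CompleteNormedModule)).
      intros z _. apply continuity_pt_filterlim, Hc.
    - apply continuity_pt_filterlim, Hc. }
  induction n as [|n [IHc IHd]].
  - assert (Hc : forall i t, continuity_pt (fun s => F i (picard 0 s)) t)
      by (intros; apply continuity_pt_const; intros a b; reflexivity).
    split; auto.
  - assert (Hc : forall i t, continuity_pt (fun s => F i (picard (S n) s)) t).
    { intros i t. apply (lipschitz_continuity_pt F L); auto.
      intros j. eapply is_derive_continuity_pt, IHd. }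
    split; auto.
Qed.

Let speed0 := Rabs (F axis0 y0) + Rabs (F axis1 y0) + Rabs (F axis2 y0).

Lemma speed0_ge0 : 0 <= speed0.
Proof.
  unfold speed0. pose proof (Rabs_pos (F axis0 y0)). pose proof (Rabs_pos (F axis1 y0)).
  pose proof (Rabs_pos (F axis2 y0)). lra.
Qed.

Lemma picard_step_bound n t i : 0 <= t ->
  Rabs (coord i (picard (S n) t) - coord i (picard n t))
  <= speed0 * (3 * L) ^ n * t ^ S n / INR (Factorial.fact (S n)).
Proof.
  revert t i. induction n as [|n IH]; intros t i Ht.
  - apply (Rabs_le_of_derive_Rabs_le (fun s => coord i (picard 1 s) - coord i (picard 0 s))
      (fun s => F i y0 - 0) (fun s => speed0 * (3 * L) ^ 0 * s ^ 1 / INR (Factorial.fact 1))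
      (fun s => speed0 * (3 * L) ^ 0 * s ^ 0 / INR (Factorial.fact 0)) t Ht).
    + rewrite !picard_at_0; ring.
    + simpl; unfold Rdiv; ring.
    + intros s _. apply is_derive_Rminus;
        [apply (proj2 (picard_continuous_derivable 0))|exact (is_derive_Rconst (coord i y0) s)].
    + intros s _. apply is_derive_pow_div_fact.
    + intros s _. rewrite Rminus_0_r. simpl. rewrite !Rmult_1_r, Rdiv_1_r.
      unfold speed0. destruct i; simpl;
      pose proof (Rabs_pos (F axis0 y0)); pose proof (Rabs_pos (F axis1 y0)); pose proof (Rabs_pos (F axis2 y0)); lra.
  - apply (Rabs_le_of_derive_Rabs_le
      (fun s => coord i (picard (S (S n)) s) - coord i (picard (S n) s))
      (fun s => F i (picard (S n) s) - F i (picard n s))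
      (fun s => speed0 * (3 * L) ^ S n * s ^ S (S n) / INR (Factorial.fact (S (S n))))
      (fun s => speed0 * (3 * L) ^ S n * s ^ S n / INR (Factorial.fact (S n))) t Ht).
    + rewrite !picard_at_0; ring.
    + simpl; unfold Rdiv; ring.
    + intros s _. apply is_derive_Rminus; apply (proj2 (picard_continuous_derivable _)).
    + intros s _. apply is_derive_pow_div_fact.
    + intros s Hs. eapply Rle_trans; [apply F_lip|]. unfold l1_dist.
      pose proof (IH s axis0 (proj1 Hs)). pose proof (IH s axis1 (proj1 Hs)). pose proof (IH s axis2 (proj1 Hs)).
      replace (speed0 * (3 * L) ^ S n * s ^ S n / INR (Factorial.fact (S n))) with
        (L * (3 * (speed0 * (3 * L) ^ n * s ^ S n / INR (Factorial.fact (S n)))))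
        by (change ((3 * L) ^ S n) with (3 * L * (3 * L) ^ n); field; apply not_0_INR, Factorial.fact_neq_0).
      apply Rmult_le_compat_l; lra.
Qed.

Definition picard_limit_coord (i : axis) (t : R) : R :=
  real (Lim_seq (fun n => coord i (picard n t))).

Lemma picard_limit_coord_spec t T i : 0 <= t <= T ->
  Un_cv (fun n => coord i (picard n t)) (picard_limit_coord i t) /\
  forall n, Rabs (picard_limit_coord i t - coord i (picard n t))
            <= 2 * (speed0 * t * exp (2 * (3 * L) * T)) * (/2) ^ n.
Proof.
  intros Ht.
  destruct (geometric_increments_converge (fun n => coord i (picard n t))
              (speed0 * t * exp (2 * (3 * L) * T))) as [l [Hl Hb]].
  { intros n. eapply Rle_trans; [apply (picard_step_bound n t i (proj1 Ht))|].
    apply pow_div_fact_le_geometric; [apply speed0_ge0|lra|lra]. }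
  replace (picard_limit_coord i t) with l; [split; auto|].
  unfold picard_limit_coord. rewrite (is_lim_seq_unique _ l); [reflexivity|].
  apply is_lim_seq_Reals. exact Hl.
Qed.

Definition picard_limit (t : R) : state := of_coords (fun i => picard_limit_coord i t).

Lemma picard_limit_at_0 : picard_limit 0 = y0.
Proof.
  assert (H0 : forall i, picard_limit_coord i 0 = coord i y0).
  { intros i. unfold picard_limit_coord.
    rewrite (Lim_seq_ext _ (fun _ => coord i y0)) by (intros; rewrite picard_at_0; auto).
    rewrite Lim_seq_const. reflexivity. }
  transitivity (of_coords (fun i => coord i y0)); [|apply of_coords_coord].
  unfold picard_limit, of_coords. rewrite !H0. reflexivity.
Qed.

Lemma picard_derivatives_CVU t (d : posreal) i : d <= t ->
  CVU (fun n s => F i (picard n s)) (fun s => F i (picard_limit s)) t d.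
Proof.
  intros Hd e He. pose proof (cond_pos d).
  set (K := speed0 * (2 * t) * exp (2 * (3 * L) * (2 * t))).
  assert (HK : 0 <= K).
  { unfold K. apply Rmult_le_pos; [apply Rmult_le_pos; [apply speed0_ge0|lra]|left; apply exp_pos]. }
  destruct (pow_lt_1_zero (/2) ltac:(rewrite Rabs_pos_eq; lra) (e / (6 * L * K + 1))) as [N HN].
  { apply Rdiv_lt_0_compat; nra. }
  exists N. intros n s Hn Hs. unfold Boule in Hs; simpl in Hs. apply Rabs_def2 in Hs.
  specialize (HN n Hn). rewrite Rabs_pos_eq in HN by (apply pow_le; lra).
  eapply Rle_lt_trans; [apply F_lip|]. unfold l1_dist, picard_limit. rewrite !coord_of_coords.
  assert (Hsum : Rabs (picard_limit_coord axis0 s - coord axis0 (picard n s))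
      + Rabs (picard_limit_coord axis1 s - coord axis1 (picard n s))
      + Rabs (picard_limit_coord axis2 s - coord axis2 (picard n s)) <= 6 * K * (/2) ^ n).
  { assert (Hb : speed0 * s * exp (2 * (3 * L) * (2 * t)) <= K).
    { unfold K. apply Rmult_le_compat_r; [left; apply exp_pos|].
      apply Rmult_le_compat_l; [apply speed0_ge0|lra]. }
    pose proof (proj2 (picard_limit_coord_spec s (2 * t) axis0 ltac:(lra)) n).
    pose proof (proj2 (picard_limit_coord_spec s (2 * t) axis1 ltac:(lra)) n).
    pose proof (proj2 (picard_limit_coord_spec s (2 * t) axis2 ltac:(lra)) n).
    pose proof (pow_le (/2) n ltac:(lra)). nra. }
  assert (E : (6 * L * K + 1) * (e / (6 * L * K + 1)) = e) by (field; nra).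
  pose proof (pow_le (/2) n ltac:(lra)).
  assert ((6 * L * K + 1) * (/2) ^ n < e) by (rewrite <- E; apply Rmult_lt_compat_l; nra).
  nra.
Qed.

Lemma picard_limit_derive t i : 0 < t ->
  is_derive (fun s => coord i (picard_limit s)) t (F i (picard_limit t)).
Proof.
  intros Ht.
  apply (is_derive_ext (picard_limit_coord i)); [intros s; unfold picard_limit; rewrite coord_of_coords; reflexivity|].
  apply is_derive_Reals.
  apply (CVU_derivable (fun n s => coord i (picard (S n) s)) (fun n s => F i (picard n s))
    (picard_limit_coord i) (fun s => F i (picard_limit s)) t (mkposreal (t / 2) ltac:(lra))).
  - apply picard_derivatives_CVU. simpl; lra.
  - intros s Hs. unfold Boule in Hs; simpl in Hs. apply Rabs_def2 in Hs.
    intros e He. destruct (proj1 (picard_limit_coord_spec s (2 * t) i ltac:(lra)) e He) as [N HN].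
    exists N. intros n Hn. apply HN. lia.
  - intros n s _. apply is_derive_Reals, picard_continuous_derivable.
  - unfold Boule; simpl. rewrite Rminus_diag, Rabs_R0. lra.
Qed.

Lemma picard_limit_right_continuous e : 0 < e -> exists d, 0 < d /\
  forall t, 0 <= t < d -> forall i, Rabs (coord i (picard_limit t) - coord i y0) < e.
Proof.
  intros He.
  set (E := exp (2 * (3 * L) * 1)).
  assert (HE : 0 < E) by apply exp_pos.
  pose proof speed0_ge0.
  exists (Rmin 1 (e / (2 * speed0 * E + 1))). split.
  { apply Rmin_pos; [lra|]. apply Rdiv_lt_0_compat; nra. }
  intros t [Ht0 Ht1] i. apply lt_Rmin in Ht1.
  pose proof (proj2 (picard_limit_coord_spec t 1 i ltac:(lra)) 0%nat) as B.
  fold E in B. simpl in B.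
  unfold picard_limit. rewrite coord_of_coords.
  assert (Ee : (2 * speed0 * E + 1) * (e / (2 * speed0 * E + 1)) = e) by (field; nra).
  assert ((2 * speed0 * E + 1) * t < e) by (rewrite <- Ee; apply Rmult_lt_compat_l; nra).
  nra.
Qed.

End PicardLindelof.

(** * First crossings and barriers *)

Definition right_continuous_at_0 (f : R -> R) :=
  forall e, 0 < e -> exists d, 0 < d /\ forall t, 0 <= t < d -> Rabs (f t - f 0) < e.

Lemma le_of_continuity_pt_left (f : R -> R) (m c : R) : continuity_pt f m -> 0 < m ->
  (forall s, 0 <= s < m -> f s < c) -> f m <= c.
Proof.
  intros Hc Hm Hbefore. apply Rnot_lt_le. intro Hgt.
  destruct (continuity_pt_elim f m Hc (f m - c) ltac:(lra)) as [d [Hd Hd']].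
  set (s := m - Rmin d m / 2).
  assert (0 < Rmin d m) by (apply Rmin_pos; lra).
  pose proof (Rmin_l d m). pose proof (Rmin_r d m).
  specialize (Hd' s ltac:(unfold s; rewrite Rabs_left; lra)).
  specialize (Hbefore s ltac:(unfold s; lra)). apply Rabs_def2 in Hd'. lra.
Qed.

(* The crossing time is the supremum of the times up to which [f] stays below [c]. *)
Lemma first_crossing (f : R -> R) (t1 c : R) : 0 < t1 ->
  (forall t, 0 < t <= t1 -> continuity_pt f t) -> right_continuous_at_0 f ->
  f 0 < c -> c <= f t1 ->
  exists t2, 0 < t2 <= t1 /\ f t2 = c /\ forall s, 0 <= s < t2 -> f s < c.
Proof.
  intros Ht1 Hc Hr H0 H1.
  set (E := fun t => 0 <= t <= t1 /\ forall s, 0 <= s <= t -> f s < c).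
  assert (HE0 : E 0) by (split; [lra|intros s Hs; replace s with 0 by lra; auto]).
  destruct (completeness E) as [m [Hub Hlub]]; [exists t1; intros x [Hx _]; lra|exists 0; auto|].
  assert (Hm1 : m <= t1) by (apply Hlub; intros x [Hx _]; lra).
  assert (Hbefore : forall s, 0 <= s < m -> f s < c).
  { intros s Hs. destruct (classic (exists t, E t /\ s < t)) as [[t [[_ Ht] Hst]]|Hn].
    - apply Ht; lra.
    - exfalso. assert (m <= s); [|lra]. apply Hlub. intros x Hx.
      apply Rnot_lt_le. intro Hsx. apply Hn. exists x; auto. }
  assert (Hmp : 0 < m).
  { destruct (Hr (c - f 0) ltac:(lra)) as [d [Hd Hd']].
    assert (E (Rmin (d / 2) t1)).
    { split; [split; [apply Rmin_glb; lra|apply Rmin_r]|].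
      intros s Hs. pose proof (Rmin_l (d / 2) t1).
      specialize (Hd' s ltac:(lra)). apply Rabs_def2 in Hd'. lra. }
    assert (Rmin (d / 2) t1 <= m) by (apply Hub; auto).
    assert (0 < Rmin (d / 2) t1) by (apply Rmin_pos; lra). lra. }
  assert (Hle : f m <= c) by (apply (le_of_continuity_pt_left f); auto; apply Hc; lra).
  assert (Hge : c <= f m).
  { apply Rnot_lt_le. intro Hlt.
    destruct (Req_dec m t1) as [->|Hne]; [lra|].
    destruct (continuity_pt_elim f m (Hc m ltac:(lra)) (c - f m) ltac:(lra)) as [d [Hd Hd']].
    assert (E (Rmin (m + d / 2) t1)).
    { split; [split; [apply Rmin_glb; lra|apply Rmin_r]|].
      intros s Hs. destruct (Rlt_dec s m) as [Hsm|Hsm]; [apply Hbefore; lra|].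
      pose proof (Rmin_l (m + d / 2) t1).
      specialize (Hd' s ltac:(rewrite Rabs_pos_eq; lra)). apply Rabs_def2 in Hd'. lra. }
    assert (Rmin (m + d / 2) t1 <= m) by (apply Hub; auto).
    assert (m < Rmin (m + d / 2) t1) by (apply Rmin_glb_lt; lra). lra. }
  exists m. repeat split; auto; lra.
Qed.

(* At the first time [f] would exceed [f 0] it is still below [b], where [f' <= 0]. *)
Lemma le_init_of_derive_nonpos_below (f df : R -> R) (T b : R) :
  (forall t, 0 < t < T -> is_derive f t (df t)) ->
  (forall t, 0 < t < T -> f t < b -> df t <= 0) ->
  right_continuous_at_0 f -> f 0 < b -> forall t, 0 <= t < T -> f t <= f 0.
Proof.
  intros Hd Hdf Hr Hb t Ht. apply Rnot_lt_le. intro Hgt.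
  destruct (Req_dec t 0) as [->|Htn]; [lra|].
  set (c := f 0 + Rmin (f t - f 0) (b - f 0) / 2).
  assert (0 < Rmin (f t - f 0) (b - f 0)) by (apply Rmin_pos; lra).
  pose proof (Rmin_l (f t - f 0) (b - f 0)). pose proof (Rmin_r (f t - f 0) (b - f 0)).
  destruct (first_crossing f t c) as [t2 [Ht2 [Hft2 Hbef]]]; auto; try (unfold c; lra).
  { intros s Hs. eapply is_derive_continuity_pt, Hd. lra. }
  destruct (MVT_cor2 f df (t2 / 2) t2) as [c0 [Heq Hc0]]; [lra|intros; apply is_derive_Reals, Hd; lra|].
  assert (f (t2 / 2) < c) by (apply Hbef; lra).
  assert (f c0 < c) by (apply Hbef; lra).
  specialize (Hdf c0 ltac:(lra) ltac:(unfold c in *; lra)).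
  assert (df c0 * (t2 - t2 / 2) <= 0) by (apply Rmult_le_0_r; lra). lra.
Qed.

Section RightContinuity.

Let extend (g : R -> R) := fun t => if Rle_dec 0 t then g t else g 0.

Lemma extend_continuity_pt g : right_continuous_at_0 g -> continuity_pt (extend g) 0.
Proof.
  intros H. apply continuity_pt_intro. intros e He. destruct (H e He) as [d [Hd Hd']].
  exists d. split; auto. intros y Hy. unfold extend.
  destruct (Rle_dec 0 0) as [_|]; [|lra].
  destruct (Rle_dec 0 y).
  - apply Hd'. rewrite Rminus_0_r in Hy. apply Rabs_def2 in Hy. lra.
  - rewrite Rminus_diag, Rabs_R0. lra.
Qed.

Lemma right_continuous_at_0_of_continuity_pt g G :
  continuity_pt G 0 -> (forall t, 0 <= t -> G t = g t) -> right_continuous_at_0 g.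
Proof.
  intros H E e He. destruct (continuity_pt_elim G 0 H e He) as [d [Hd Hd']].
  exists d. split; auto. intros t Ht. rewrite <- (E t), <- (E 0) by lra. apply Hd'.
  rewrite Rminus_0_r, Rabs_pos_eq; lra.
Qed.

Lemma extend_nonneg g t : 0 <= t -> extend g t = g t.
Proof. intros Ht. unfold extend. destruct (Rle_dec 0 t); [auto|lra]. Qed.

Lemma right_continuous_at_0_plus f g : right_continuous_at_0 f -> right_continuous_at_0 g ->
  right_continuous_at_0 (fun t => f t + g t).
Proof.
  intros Hf Hg. apply (right_continuous_at_0_of_continuity_pt _ (plus_fct (extend f) (extend g))).
  - apply continuity_pt_plus; apply extend_continuity_pt; auto.
  - intros t Ht. unfold plus_fct. rewrite !extend_nonneg; auto.
Qed.

Lemma right_continuous_at_0_minus f g : right_continuous_at_0 f -> right_continuous_at_0 g ->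
  right_continuous_at_0 (fun t => f t - g t).
Proof.
  intros Hf Hg. apply (right_continuous_at_0_of_continuity_pt _ (minus_fct (extend f) (extend g))).
  - apply continuity_pt_minus; apply extend_continuity_pt; auto.
  - intros t Ht. unfold minus_fct. rewrite !extend_nonneg; auto.
Qed.

Lemma right_continuous_at_0_mult f g : right_continuous_at_0 f -> right_continuous_at_0 g ->
  right_continuous_at_0 (fun t => f t * g t).
Proof.
  intros Hf Hg. apply (right_continuous_at_0_of_continuity_pt _ (mult_fct (extend f) (extend g))).
  - apply continuity_pt_mult; apply extend_continuity_pt; auto.
  - intros t Ht. unfold mult_fct. rewrite !extend_nonneg; auto.
Qed.

Lemma right_continuous_at_0_comp (h g : R -> R) :
  continuity_pt h (g 0) -> right_continuous_at_0 g -> right_continuous_at_0 (fun t => h (g t)).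
Proof.
  intros Hh Hg. apply (right_continuous_at_0_of_continuity_pt _ (comp h (extend g))).
  - apply continuity_pt_comp; [apply extend_continuity_pt; auto|].
    rewrite extend_nonneg; [auto|lra].
  - intros t Ht. unfold comp. rewrite extend_nonneg; auto.
Qed.

End RightContinuity.

Lemma right_continuous_at_0_const c : right_continuous_at_0 (fun _ => c).
Proof. intros e He. exists 1. split; [lra|]. intros. rewrite Rminus_diag, Rabs_R0; lra. Qed.

Lemma right_continuous_at_0_continuous (f : R -> R) :
  continuity_pt f 0 -> right_continuous_at_0 f.
Proof. intros H. apply (right_continuous_at_0_of_continuity_pt f f); auto. Qed.

Lemma right_continuous_at_0_sq f : right_continuous_at_0 f -> right_continuous_at_0 (fun t => f t ^ 2).
Proof.
  intros H. apply (right_continuous_at_0_comp (fun u => u ^ 2)); auto.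
  apply derivable_continuous_pt, derivable_pt_pow.
Qed.

(** * The model on the slow manifold *)

Lemma s2_value : s2 = -477/1000. Proof. unfold s2, Q2R; simpl. lra. Qed.
Lemma Bc_value : Bc = 19/10. Proof. unfold Bc, Q2R; simpl. lra. Qed.
Lemma alpha1_value : alpha1 = 32/100. Proof. unfold alpha1, Q2R; simpl. lra. Qed.
Lemma alpha2_value : alpha2 = 62/100. Proof. unfold alpha2, Q2R; simpl. lra. Qed.
Lemma Dc_value : Dc = 35/100. Proof. unfold Dc, Q2R; simpl. lra. Qed.

(* The slow manifold [T0 = phi0 eta], [T2 = phi2 eta] is where the first two right-hand sides
   vanish, and [h_slow eta = phi0 eta + phi2 eta * p2 eta - Tc] is the [eta]-equation on it,
   divided by [eps]. *)
Definition phi0 (x : R) : R := -3583/95 + 2548833/38000 * x - 490833/38000 * x^3.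
Definition phi2 (x : R) : R :=
  -3108609/200000 - 2548833/32000 * x + 1519833/16000 * x^3 - 4417497/160000 * x^5.
Definition h_slow (x : R) : R :=
  -151576429/7600000 + 129990483/1216000 * x - 9325827/400000 * x^2
  - 218743791/1216000 * x^3 + 50012487/320000 * x^5 - 13252491/320000 * x^7.

Definition dphi0 (x : R) : R := 2548833/38000 - 3 * (490833/38000) * x^2.
Definition dphi2 (x : R) : R :=
  - 2548833/32000 + 3 * (1519833/16000) * x^2 - 5 * (4417497/160000) * x^4.
Definition dh_slow (x : R) : R :=
  129990483/1216000 - 2 * (9325827/400000) * x - 3 * (218743791/1216000) * x^2
  + 5 * (50012487/320000) * x^4 - 7 * (13252491/320000) * x^6.

Definition dev0 (x : state) : R := T0_of x - phi0 (eta_of x).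
Definition dev2 (x : state) : R := T2_of x - phi2 (eta_of x).

Ltac unfold_model :=
  unfold rhs_T0, rhs_T2, rhs_eta, dev0, dev2, phi0, phi2, h_slow, p2, alphabar0, alphabar2,
    Iq0, Iq2, Qc, s0, Ac, Tc;
  rewrite ?s2_value, ?Bc_value, ?alpha1_value, ?alpha2_value, ?Dc_value.

Lemma rhs_T0_slow Rr x : Rr <> 0 -> rhs_T0 Rr x = - (19/10) * dev0 x / Rr.
Proof. intros. unfold_model. field. auto. Qed.

Lemma rhs_T2_slow Rr x : Rr <> 0 -> rhs_T2 Rr x = - 4 * dev2 x / Rr.
Proof. intros. unfold_model. field. auto. Qed.

Lemma rhs_eta_slow eps x :
  rhs_eta eps x = eps * (h_slow (eta_of x) + dev0 x + dev2 x * p2 (eta_of x)).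
Proof. unfold_model. field. Qed.

Lemma is_derive_phi0 x : is_derive phi0 x (dphi0 x).
Proof. unfold phi0, dphi0. auto_derive; auto. unfold Rdiv; ring. Qed.
Lemma is_derive_phi2 x : is_derive phi2 x (dphi2 x).
Proof. unfold phi2, dphi2. auto_derive; auto. unfold Rdiv; ring. Qed.
Lemma is_derive_h_slow x : is_derive h_slow x (dh_slow x).
Proof. unfold h_slow, dh_slow. auto_derive; auto. unfold Rdiv; ring. Qed.

Lemma bernstein_nonneg a b x k m : a <= x <= b -> 0 <= (x - a) ^ k * (b - x) ^ m.
Proof. intros. apply Rmult_le_pos; apply pow_le; lra. Qed.

(* The Bernstein basis of degree 7 on [a, b] is nonnegative there; a polynomial bound of
   degree <= 7 whose Bernstein coefficients have the right sign then follows by lra. *)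
Ltac bernstein a b x H :=
  pose proof (bernstein_nonneg a b x 0 7 H); pose proof (bernstein_nonneg a b x 1 6 H);
  pose proof (bernstein_nonneg a b x 2 5 H); pose proof (bernstein_nonneg a b x 3 4 H);
  pose proof (bernstein_nonneg a b x 4 3 H); pose proof (bernstein_nonneg a b x 5 2 H);
  pose proof (bernstein_nonneg a b x 6 1 H); pose proof (bernstein_nonneg a b x 7 0 H);
  simpl in *.

Lemma h_slow_neg_low x : 0 <= x <= 19/100 -> h_slow x < 0.
Proof. intro H. bernstein 0 (19/100) x H. unfold h_slow. lra. Qed.
Lemma h_slow_pos_mid x : 23/100 <= x <= 82/100 -> 0 < h_slow x.
Proof. intro H. bernstein (23/100) (82/100) x H. unfold h_slow. lra. Qed.
Lemma h_slow_neg_high x : 86/100 <= x <= 1 -> h_slow x < 0.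
Proof. intro H. bernstein (86/100) 1 x H. unfold h_slow. lra. Qed.
Lemma dh_slow_ge_low x : 19/100 <= x <= 23/100 -> 50 <= dh_slow x.
Proof. intro H. bernstein (19/100) (23/100) x H. unfold dh_slow. lra. Qed.
Lemma dh_slow_le_high x : 82/100 <= x <= 86/100 -> dh_slow x <= -15.
Proof. intro H. bernstein (82/100) (86/100) x H. unfold dh_slow. lra. Qed.
Lemma dh_slow_bound x : 0 <= x <= 1 -> Rabs (dh_slow x) <= 200.
Proof. intro H. bernstein 0 1 x H. apply Rabs_le. unfold dh_slow. split; lra. Qed.
Lemma dphi0_bound x : 0 <= x <= 1 -> Rabs (dphi0 x) <= 200.
Proof. intro H. bernstein 0 1 x H. apply Rabs_le. unfold dphi0. split; lra. Qed.
Lemma dphi2_bound x : 0 <= x <= 1 -> Rabs (dphi2 x) <= 200.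
Proof. intro H. bernstein 0 1 x H. apply Rabs_le. unfold dphi2. split; lra. Qed.
Lemma phi2_bound x : 0 <= x <= 1 -> Rabs (phi2 x) <= 60.
Proof. intro H. bernstein 0 1 x H. apply Rabs_le. unfold phi2. split; lra. Qed.
Lemma p2_bound x : 0 <= x <= 1 -> Rabs (p2 x) <= 1.
Proof. intro H. apply Rabs_le. unfold p2. split; nra. Qed.

Lemma h_slow_lipschitz x y : 0 <= x <= 1 -> 0 <= y <= 1 -> Rabs (h_slow x - h_slow y) <= 200 * Rabs (x - y).
Proof. apply (lipschitz_of_derive_bounded h_slow dh_slow); [intros; apply is_derive_h_slow|apply dh_slow_bound]. Qed.
Lemma phi0_lipschitz x y : 0 <= x <= 1 -> 0 <= y <= 1 -> Rabs (phi0 x - phi0 y) <= 200 * Rabs (x - y).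
Proof. apply (lipschitz_of_derive_bounded phi0 dphi0); [intros; apply is_derive_phi0|apply dphi0_bound]. Qed.
Lemma phi2_lipschitz x y : 0 <= x <= 1 -> 0 <= y <= 1 -> Rabs (phi2 x - phi2 y) <= 200 * Rabs (x - y).
Proof. apply (lipschitz_of_derive_bounded phi2 dphi2); [intros; apply is_derive_phi2|apply dphi2_bound]. Qed.
Lemma p2_lipschitz x y : 0 <= x <= 1 -> 0 <= y <= 1 -> Rabs (p2 x - p2 y) <= 3 * Rabs (x - y).
Proof.
  intros Hx Hy. replace (p2 x - p2 y) with (3/2 * (x + y) * (x - y)) by (unfold p2; field).
  rewrite Rabs_mult. apply Rmult_le_compat_r; [apply Rabs_pos|]. rewrite Rabs_pos_eq; lra.
Qed.

Lemma h_slow_root_in a b : a < b -> h_slow a * h_slow b < 0 -> exists e, a < e < b /\ h_slow e = 0.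
Proof.
  intros Hab Hs.
  assert (Hc : continuity h_slow) by (intro x; eapply is_derive_continuity_pt, is_derive_h_slow).
  destruct (Rlt_dec (h_slow a) 0) as [Ha|Ha].
  - destruct (IVT_gen h_slow a b 0 Hc) as [e [He He0]].
    { rewrite Rmin_left, Rmax_right; nra. }
    rewrite Rmin_left, Rmax_right in He by lra.
    exists e. split; [|auto]. split; apply Rnot_ge_lt; intro.
    + replace e with a in He0 by lra. lra.
    + replace e with b in He0 by lra. nra.
  - destruct (IVT_gen h_slow a b 0 Hc) as [e [He He0]].
    { rewrite Rmin_right, Rmax_left; nra. }
    rewrite Rmin_left, Rmax_right in He by lra.
    exists e. split; [|auto]. split; apply Rnot_ge_lt; intro.
    + replace e with a in He0 by lra. nra.
    + replace e with b in He0 by lra. nra.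
Qed.

Lemma h_slow_root_low : exists e, 19/100 < e < 23/100 /\ h_slow e = 0.
Proof.
  apply h_slow_root_in; [lra|].
  pose proof (h_slow_neg_low (19/100) ltac:(lra)). pose proof (h_slow_pos_mid (23/100) ltac:(lra)). nra.
Qed.

Lemma h_slow_root_high : exists e, 82/100 < e < 86/100 /\ h_slow e = 0.
Proof.
  apply h_slow_root_in; [lra|].
  pose proof (h_slow_pos_mid (82/100) ltac:(lra)). pose proof (h_slow_neg_high (86/100) ltac:(lra)). nra.
Qed.

Lemma h_slow_repelling e1 : 19/100 < e1 < 23/100 -> h_slow e1 = 0 ->
  forall e, 19/100 <= e <= 23/100 -> 50 * (e - e1)^2 <= (e - e1) * h_slow e.
Proof.
  intros H1 H0 e He.
  destruct (MVT_in_interval h_slow dh_slow (19/100) (23/100) e1 e) as [c [Hc Heq]]; try lra.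
  { intros; apply is_derive_h_slow. }
  rewrite H0, Rminus_0_r in Heq. rewrite Heq. pose proof (dh_slow_ge_low c Hc).
  pose proof (pow2_ge_0 (e - e1)). nra.
Qed.

Lemma h_slow_attracting e2 : 82/100 < e2 < 86/100 -> h_slow e2 = 0 ->
  forall e, 82/100 <= e <= 86/100 -> (e - e2) * h_slow e <= -15 * (e - e2)^2.
Proof.
  intros H1 H0 e He.
  destruct (MVT_in_interval h_slow dh_slow (82/100) (86/100) e2 e) as [c [Hc Heq]]; try lra.
  { intros; apply is_derive_h_slow. }
  rewrite H0, Rminus_0_r in Heq. rewrite Heq. pose proof (dh_slow_le_high c Hc).
  pose proof (pow2_ge_0 (e - e2)). nra.
Qed.

Lemma h_slow_roots_unique e1 e2 :
  19/100 < e1 < 23/100 -> h_slow e1 = 0 -> 82/100 < e2 < 86/100 -> h_slow e2 = 0 ->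
  forall z, 0 <= z <= 1 -> h_slow z = 0 -> z = e1 \/ z = e2.
Proof.
  intros H1 H10 H2 H20 z Hz Hz0.
  destruct (Rlt_le_dec z (19/100)); [pose proof (h_slow_neg_low z ltac:(lra)); lra|].
  destruct (Rle_lt_dec z (23/100)).
  { left. pose proof (h_slow_repelling e1 H1 H10 z ltac:(lra)) as Hrep. rewrite Hz0 in Hrep. nra. }
  destruct (Rlt_le_dec z (82/100)); [pose proof (h_slow_pos_mid z ltac:(lra)); lra|].
  destruct (Rle_lt_dec z (86/100)).
  { right. pose proof (h_slow_attracting e2 H2 H20 z ltac:(lra)) as Hatt. rewrite Hz0 in Hatt. nra. }
  pose proof (h_slow_neg_high z ltac:(lra)); lra.
Qed.

Definition slow_point (e : R) : state := (phi0 e, phi2 e, e).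

Lemma equilibrium_iff Rr eps x : 0 < Rr -> 0 < eps ->
  is_equilibrium Rr eps x <-> x = slow_point (eta_of x) /\ h_slow (eta_of x) = 0.
Proof.
  intros HR He. unfold is_equilibrium. rewrite rhs_T0_slow, rhs_T2_slow, rhs_eta_slow by lra.
  destruct x as [[a b] c]. unfold slow_point, dev0, dev2, T0_of, T2_of, eta_of; simpl.
  split.
  - intros [H0 [H2 H3]].
    assert (E0 : a = phi0 c).
    { apply (Rmult_eq_compat_r Rr) in H0. field_simplify in H0; lra. }
    assert (E2 : b = phi2 c).
    { apply (Rmult_eq_compat_r Rr) in H2. field_simplify in H2; lra. }
    subst a b. split; [reflexivity|].
    rewrite !Rminus_diag, Rmult_0_l, !Rplus_0_r in H3.
    apply Rmult_integral in H3 as [|]; lra.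
  - intros [E H]. injection E as -> ->. rewrite !Rminus_diag, H. split; [|split]; field; lra.
Qed.

(** * Energy estimates *)

Definition Cc : R := (1 + 200 * 200) ^ 2 / 15 + 400.

Lemma Cc_pos : 0 < Cc.
Proof. unfold Cc. simpl. lra. Qed.

(* Young's inequality splits the terms coupling [w = eta - es] to the fast deviations [u0, u2]
   into [15/2 w^2] plus a multiple [Cc] of [u0^2 + u2^2]; the [u] part is then absorbed
   by the fast damping once [eps] is small. *)
Lemma cross_terms_bound u0 u2 w hv pv d0 d2 :
  Rabs hv <= 200 * Rabs w -> Rabs pv <= 1 -> Rabs d0 <= 200 -> Rabs d2 <= 200 ->
  Rabs (w * (u0 + u2 * pv)) + Rabs ((hv + u0 + u2 * pv) * (d0 * u0 + d2 * u2))
    <= 15/2 * w^2 + Cc * (u0^2 + u2^2).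
Proof.
  intros Hh Hp Hd0 Hd2.
  set (a := Rabs u0). set (b := Rabs u2). set (z := Rabs w).
  assert (Ha : 0 <= a) by apply Rabs_pos. assert (Hb : 0 <= b) by apply Rabs_pos.
  assert (Hz : 0 <= z) by apply Rabs_pos.
  assert (Hub : Rabs (u2 * pv) <= b)
    by (rewrite Rabs_mult; unfold b; pose proof (Rabs_pos pv); pose proof (Rabs_pos u2); nra).
  assert (H1 : Rabs (w * (u0 + u2 * pv)) <= z * (a + b)).
  { rewrite Rabs_mult. apply Rmult_le_compat_l; [apply Rabs_pos|].
    eapply Rle_trans; [apply Rabs_triang|]. unfold a; lra. }
  assert (Hg : Rabs (hv + u0 + u2 * pv) <= 200 * z + a + b).
  { eapply Rle_trans; [apply Rabs_triang|].
    eapply Rle_trans; [apply Rplus_le_compat_r; apply Rabs_triang|]. unfold a, z in *; lra. }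
  assert (Hd : Rabs (d0 * u0 + d2 * u2) <= 200 * (a + b)).
  { eapply Rle_trans; [apply Rabs_triang|]. rewrite !Rabs_mult.
    pose proof (Rabs_pos d0). pose proof (Rabs_pos d2). unfold a, b in *. nra. }
  assert (H2 : Rabs ((hv + u0 + u2 * pv) * (d0 * u0 + d2 * u2)) <= (200 * z + a + b) * (200 * (a + b)))
    by (rewrite Rabs_mult; apply Rmult_le_compat; auto using Rabs_pos).
  assert (Ea : a^2 = u0^2) by (unfold a; rewrite RPow_abs, Rabs_pos_eq; [reflexivity|apply pow2_ge_0]).
  assert (Eb : b^2 = u2^2) by (unfold b; rewrite RPow_abs, Rabs_pos_eq; [reflexivity|apply pow2_ge_0]).
  assert (Ez : z^2 = w^2) by (unfold z; rewrite RPow_abs, Rabs_pos_eq; [reflexivity|apply pow2_ge_0]).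
  rewrite <- Ea, <- Eb, <- Ez.
  assert (S1 : 0 <= (z - 40001/15 * (a + b))^2) by apply pow2_ge_0.
  assert (S2 : 0 <= (a - b)^2) by apply pow2_ge_0.
  unfold Cc. simpl in *. nra.
Qed.

Section EnergyRates.

Variables Rr eps u0 u2 w hv pv d0 d2 : R.
Hypotheses (HR : 0 < Rr) (Heps : 0 < eps) (Hsmall : eps * Cc * (2 * Rr) <= 1).
Hypotheses (Hh : Rabs hv <= 200 * Rabs w) (Hp : Rabs pv <= 1)
  (Hd0 : Rabs d0 <= 200) (Hd2 : Rabs d2 <= 200).

Let c := eps * (hv + u0 + u2 * pv).
Let fast_rate := 2 * u0 * (- (19/10) * u0 / Rr - d0 * c) + 2 * u2 * (- 4 * u2 / Rr - d2 * c).

Lemma eps_Cc_absorbed : eps * (Cc * (u0^2 + u2^2)) <= /2 * (u0^2 / Rr) + /2 * (u2^2 / Rr).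
Proof.
  assert (HCR : eps * Cc <= 1 / (2 * Rr)).
  { apply (Rmult_le_reg_r (2 * Rr)); [lra|]. field_simplify; lra. }
  pose proof (pow2_ge_0 u0). pose proof (pow2_ge_0 u2).
  replace (/2 * (u0^2 / Rr) + /2 * (u2^2 / Rr)) with ((1 / (2 * Rr)) * (u0^2 + u2^2)) by (field; lra).
  rewrite <- Rmult_assoc. apply Rmult_le_compat_r; lra.
Qed.

Lemma fast_rate_split : fast_rate =
  - (19/5) * (u0^2 / Rr) - 8 * (u2^2 / Rr) - 2 * eps * ((hv + u0 + u2 * pv) * (d0 * u0 + d2 * u2)).
Proof. unfold fast_rate, c. field. lra. Qed.

Lemma lyapunov_rate_ineq : w * hv <= -15 * w^2 ->
  fast_rate + 2 * w * c <= - (2 / Rr) * (u0^2 + u2^2) - 15 * eps * w^2.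
Proof.
  intros Hw. rewrite fast_rate_split.
  pose proof (cross_terms_bound u0 u2 w hv pv d0 d2 Hh Hp Hd0 Hd2) as Hc.
  pose proof (Rle_abs (w * (u0 + u2 * pv))) as A1.
  pose proof (Rle_abs (- ((hv + u0 + u2 * pv) * (d0 * u0 + d2 * u2)))) as A2. rewrite Rabs_Ropp in A2.
  assert (B1 : eps * (w * hv) <= eps * (-15 * w^2)) by (apply Rmult_le_compat_l; lra).
  assert (B2 : eps * (w * (u0 + u2 * pv) - (hv + u0 + u2 * pv) * (d0 * u0 + d2 * u2))
               <= eps * (15/2 * w^2 + Cc * (u0^2 + u2^2))) by (apply Rmult_le_compat_l; lra).
  pose proof eps_Cc_absorbed.
  assert (P1 : 0 <= u0^2 / Rr) by (apply Rdiv_le_0_compat; [apply pow2_ge_0|lra]).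
  assert (P2 : 0 <= u2^2 / Rr) by (apply Rdiv_le_0_compat; [apply pow2_ge_0|lra]).
  replace (- (2 / Rr) * (u0^2 + u2^2)) with (-2 * (u0^2 / Rr) - 2 * (u2^2 / Rr)) by (field; lra).
  unfold c. lra.
Qed.

Lemma chetaev_rate_ineq : 50 * w^2 <= w * hv -> 85 * eps * w^2 <= 2 * w * c - fast_rate.
Proof.
  intros Hw. rewrite fast_rate_split.
  pose proof (cross_terms_bound u0 u2 w hv pv d0 d2 Hh Hp Hd0 Hd2) as Hc.
  pose proof (Rle_abs (- (w * (u0 + u2 * pv)))) as A1. rewrite Rabs_Ropp in A1.
  pose proof (Rle_abs (- ((hv + u0 + u2 * pv) * (d0 * u0 + d2 * u2)))) as A2. rewrite Rabs_Ropp in A2.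
  assert (B1 : eps * (50 * w^2) <= eps * (w * hv)) by (apply Rmult_le_compat_l; lra).
  assert (B2 : eps * (- (w * (u0 + u2 * pv)) - (hv + u0 + u2 * pv) * (d0 * u0 + d2 * u2))
               <= eps * (15/2 * w^2 + Cc * (u0^2 + u2^2))) by (apply Rmult_le_compat_l; lra).
  pose proof eps_Cc_absorbed.
  assert (P1 : 0 <= u0^2 / Rr) by (apply Rdiv_le_0_compat; [apply pow2_ge_0|lra]).
  assert (P2 : 0 <= u2^2 / Rr) by (apply Rdiv_le_0_compat; [apply pow2_ge_0|lra]).
  unfold c. lra.
Qed.

End EnergyRates.

(** * Lyapunov and Chetaev functions *)

Definition off_slow (x : state) : R := dev0 x ^ 2 + dev2 x ^ 2.
Definition lyapunov_V (es : R) (x : state) : R := off_slow x + (eta_of x - es) ^ 2.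
Definition chetaev_P (es : R) (x : state) : R := (eta_of x - es) ^ 2 - off_slow x.

Definition off_slow_rate (x : state) (a b c : R) : R :=
  2 * dev0 x * (a - dphi0 (eta_of x) * c) + 2 * dev2 x * (b - dphi2 (eta_of x) * c).

Lemma off_slow_ge0 x : 0 <= off_slow x.
Proof. unfold off_slow. pose proof (pow2_ge_0 (dev0 x)). pose proof (pow2_ge_0 (dev2 x)). lra. Qed.

Lemma lyapunov_V_ge0 es x : 0 <= lyapunov_V es x.
Proof. unfold lyapunov_V. pose proof (off_slow_ge0 x). pose proof (pow2_ge_0 (eta_of x - es)). lra. Qed.

Section AlongACurve.

Variables (y : R -> state) (t a b c : R).
Hypotheses (D0 : is_derive (fun s => T0_of (y s)) t a) (D2 : is_derive (fun s => T2_of (y s)) t b)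
  (De : is_derive (fun s => eta_of (y s)) t c).

Lemma is_derive_off_slow : is_derive (fun s => off_slow (y s)) t (off_slow_rate (y t) a b c).
Proof.
  unfold off_slow, off_slow_rate, dev0, dev2.
  apply is_derive_Rplus.
  - apply (is_derive_Rsqr (fun s => T0_of (y s) - phi0 (eta_of (y s)))), is_derive_Rminus; [auto|].
    apply (is_derive_Rcomp phi0 (fun s => eta_of (y s))); [apply is_derive_phi0|auto].
  - apply (is_derive_Rsqr (fun s => T2_of (y s) - phi2 (eta_of (y s)))), is_derive_Rminus; [auto|].
    apply (is_derive_Rcomp phi2 (fun s => eta_of (y s))); [apply is_derive_phi2|auto].
Qed.

Lemma is_derive_eta_dev_sq es :
  is_derive (fun s => (eta_of (y s) - es) ^ 2) t (2 * (eta_of (y t) - es) * c).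
Proof.
  replace (2 * (eta_of (y t) - es) * c) with (2 * (eta_of (y t) - es) * (c - 0)) by ring.
  apply (is_derive_Rsqr (fun s => eta_of (y s) - es)), is_derive_Rminus; [auto|apply is_derive_Rconst].
Qed.

End AlongACurve.

Section RightContinuityAlongACurve.

Variables (y : R -> state).
Hypotheses (R0 : right_continuous_at_0 (fun s => T0_of (y s)))
  (R2 : right_continuous_at_0 (fun s => T2_of (y s)))
  (Re : right_continuous_at_0 (fun s => eta_of (y s))).

Lemma right_continuous_at_0_off_slow : right_continuous_at_0 (fun s => off_slow (y s)).
Proof.
  assert (Hphi : forall phi : R -> R, (forall x, continuity_pt phi x) ->
    right_continuous_at_0 (fun s => phi (eta_of (y s)))).
  { intros phi Hc. apply right_continuous_at_0_comp; auto. }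
  unfold off_slow, dev0, dev2.
  apply right_continuous_at_0_plus; apply right_continuous_at_0_sq, right_continuous_at_0_minus; auto;
    apply Hphi; intros x; eapply is_derive_continuity_pt; [apply is_derive_phi0|apply is_derive_phi2].
Qed.

Lemma right_continuous_at_0_eta_dev_sq es : right_continuous_at_0 (fun s => (eta_of (y s) - es) ^ 2).
Proof.
  apply right_continuous_at_0_sq, right_continuous_at_0_minus; [auto|apply right_continuous_at_0_const].
Qed.

End RightContinuityAlongACurve.

Lemma lyapunov_V_rate Rr eps es x :
  0 < Rr -> 0 < eps -> eps * Cc * (2 * Rr) <= 1 ->
  82/100 < es < 86/100 -> h_slow es = 0 -> 82/100 <= eta_of x <= 86/100 ->
  off_slow_rate x (rhs_T0 Rr x) (rhs_T2 Rr x) (rhs_eta eps x) + 2 * (eta_of x - es) * rhs_eta eps x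
  <= - (2 / Rr) * off_slow x - 15 * eps * (eta_of x - es) ^ 2.
Proof.
  intros HR He Hsmall Hes Hroot Hx.
  assert (Hx01 : 0 <= eta_of x <= 1) by lra.
  pose proof (h_slow_lipschitz (eta_of x) es Hx01 ltac:(lra)) as Hlip. rewrite Hroot, Rminus_0_r in Hlip.
  rewrite rhs_T0_slow, rhs_T2_slow, rhs_eta_slow by lra. unfold off_slow_rate, off_slow.
  apply (lyapunov_rate_ineq Rr eps (dev0 x) (dev2 x) (eta_of x - es) (h_slow (eta_of x)) (p2 (eta_of x))
    (dphi0 (eta_of x)) (dphi2 (eta_of x))); auto using p2_bound, dphi0_bound, dphi2_bound.
  apply h_slow_attracting; auto.
Qed.

Lemma chetaev_P_rate Rr eps es x :
  0 < Rr -> 0 < eps -> eps * Cc * (2 * Rr) <= 1 ->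
  19/100 < es < 23/100 -> h_slow es = 0 -> 19/100 <= eta_of x <= 23/100 ->
  85 * eps * (eta_of x - es) ^ 2
  <= 2 * (eta_of x - es) * rhs_eta eps x - off_slow_rate x (rhs_T0 Rr x) (rhs_T2 Rr x) (rhs_eta eps x).
Proof.
  intros HR He Hsmall Hes Hroot Hx.
  assert (Hx01 : 0 <= eta_of x <= 1) by lra.
  pose proof (h_slow_lipschitz (eta_of x) es Hx01 ltac:(lra)) as Hlip. rewrite Hroot, Rminus_0_r in Hlip.
  rewrite rhs_T0_slow, rhs_T2_slow, rhs_eta_slow by lra. unfold off_slow_rate.
  apply (chetaev_rate_ineq Rr eps (dev0 x) (dev2 x) (eta_of x - es) (h_slow (eta_of x)) (p2 (eta_of x))
    (dphi0 (eta_of x)) (dphi2 (eta_of x))); auto using p2_bound, dphi0_bound, dphi2_bound.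
  apply h_slow_repelling; auto.
Qed.

(** * Stability of the upper equilibrium *)

Lemma dist3_lt_iff x y d : dist3 x y < d <->
  Rabs (T0_of x - T0_of y) < d /\ Rabs (T2_of x - T2_of y) < d /\ Rabs (eta_of x - eta_of y) < d.
Proof. unfold dist3. rewrite !Rmax_Rlt. tauto. Qed.

Lemma solution_right_continuous Rr eps x Tm : is_solution_on Rr eps x Tm -> 0 < Tm ->
  right_continuous_at_0 (fun t => T0_of (x t)) /\ right_continuous_at_0 (fun t => T2_of (x t)) /\
  right_continuous_at_0 (fun t => eta_of (x t)).
Proof.
  intros [_ Hc] HT.
  assert (K : forall e, 0 < e -> exists d, 0 < d /\ forall t, 0 <= t < d -> dist3 (x t) (x 0) < e).
  { intros e He. destruct (Hc e He) as [d [Hd Hd']]. exists (Rmin d Tm). split; [apply Rmin_pos; lra|].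
    intros t Ht. pose proof (Rmin_l d Tm). pose proof (Rmin_r d Tm). apply Hd'; lra. }
  split; [|split]; intros e He; destruct (K e He) as [d [Hd Hd']]; exists d; split; auto;
    intros t Ht; apply dist3_lt_iff, Hd', Ht.
Qed.

Lemma solution_derive Rr eps x Tm t : is_solution_on Rr eps x Tm -> 0 < t < Tm ->
  is_derive (fun u => T0_of (x u)) t (rhs_T0 Rr (x t)) /\
  is_derive (fun u => T2_of (x u)) t (rhs_T2 Rr (x t)) /\
  is_derive (fun u => eta_of (x u)) t (rhs_eta eps (x t)).
Proof.
  intros [Hd _] Ht. destruct (Hd t Ht) as [A [B C]].
  split; [|split]; apply is_derive_Reals; auto.
Qed.

Lemma dist3_slow_point_lt x es r : 1/10 <= es <= 9/10 -> 0 < r <= 1/10 ->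
  lyapunov_V es x < r ^ 2 -> dist3 x (slow_point es) < 201 * r.
Proof.
  unfold lyapunov_V, off_slow. intros Hes Hr HV.
  assert (Hsq : forall a, a ^ 2 < r ^ 2 -> Rabs a < r) by (intros a Ha; apply Rabs_def1; nra).
  pose proof (pow2_ge_0 (dev0 x)). pose proof (pow2_ge_0 (dev2 x)). pose proof (pow2_ge_0 (eta_of x - es)).
  assert (A0 : Rabs (dev0 x) < r) by (apply Hsq; lra).
  assert (A2 : Rabs (dev2 x) < r) by (apply Hsq; lra).
  assert (Ae : Rabs (eta_of x - es) < r) by (apply Hsq; lra).
  apply Rabs_def2 in Ae as Ae'.
  assert (Hin : 0 <= eta_of x <= 1) by lra.
  pose proof (phi0_lipschitz (eta_of x) es Hin ltac:(lra)).
  pose proof (phi2_lipschitz (eta_of x) es Hin ltac:(lra)).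
  unfold dev0, dev2 in *. apply dist3_lt_iff. unfold slow_point, T0_of, T2_of, eta_of in *; simpl.
  split; [|split; [|lra]].
  - replace (fst (fst x) - phi0 es) with ((fst (fst x) - phi0 (snd x)) + (phi0 (snd x) - phi0 es)) by ring.
    eapply Rle_lt_trans; [apply Rabs_triang|]. lra.
  - replace (snd (fst x) - phi2 es) with ((snd (fst x) - phi2 (snd x)) + (phi2 (snd x) - phi2 es)) by ring.
    eapply Rle_lt_trans; [apply Rabs_triang|]. lra.
Qed.

Lemma dist3_slow_points a b : 0 <= a <= 1 -> 0 <= b <= 1 ->
  dist3 (slow_point a) (slow_point b) <= 200 * Rabs (a - b).
Proof.
  intros Ha Hb. pose proof (phi0_lipschitz a b Ha Hb). pose proof (phi2_lipschitz a b Ha Hb).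
  pose proof (Rabs_pos (a - b)).
  unfold dist3, slow_point, T0_of, T2_of, eta_of; simpl.
  repeat apply Rmax_lub; lra.
Qed.

Lemma lyapunov_V_lt_of_dist3 x es d : 1/10 <= es <= 9/10 -> 0 < d <= 1/10 ->
  dist3 x (slow_point es) < d -> lyapunov_V es x < (400 * d) ^ 2.
Proof.
  intros Hes Hd H. apply dist3_lt_iff in H as [H0 [H2 He]].
  unfold slow_point, T0_of, T2_of, eta_of in *; simpl in *.
  unfold lyapunov_V, off_slow, dev0, dev2, T0_of, T2_of, eta_of.
  apply Rabs_def2 in He as He'.
  assert (Hin : 0 <= snd x <= 1) by lra.
  pose proof (phi0_lipschitz (snd x) es Hin ltac:(lra)). pose proof (phi2_lipschitz (snd x) es Hin ltac:(lra)).
  assert (Hsq : forall a b, Rabs a < b -> a ^ 2 < b ^ 2).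
  { intros a b Hab. rewrite <- (Rsqr_pow2 a), <- (Rsqr_pow2 b). rewrite Rsqr_abs. apply Rsqr_lt_abs_1.
    rewrite (Rabs_pos_eq b); [|pose proof (Rabs_pos a); lra]. rewrite Rabs_Rabsolu. exact Hab. }
  assert (B0 : (fst (fst x) - phi0 (snd x)) ^ 2 < (201 * d) ^ 2).
  { apply Hsq. replace (fst (fst x) - phi0 (snd x)) with ((fst (fst x) - phi0 es) + -(phi0 (snd x) - phi0 es)) by ring.
    eapply Rle_lt_trans; [apply Rabs_triang|]. rewrite Rabs_Ropp. lra. }
  assert (B2 : (snd (fst x) - phi2 (snd x)) ^ 2 < (201 * d) ^ 2).
  { apply Hsq. replace (snd (fst x) - phi2 (snd x)) with ((snd (fst x) - phi2 es) + -(phi2 (snd x) - phi2 es)) by ring.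
    eapply Rle_lt_trans; [apply Rabs_triang|]. rewrite Rabs_Ropp. lra. }
  apply Hsq in He. nra.
Qed.

Lemma is_derive_lyapunov_V_solution Rr eps es x Tm s : is_solution_on Rr eps x Tm -> 0 < s < Tm ->
  is_derive (fun u => lyapunov_V es (x u)) s
    (off_slow_rate (x s) (rhs_T0 Rr (x s)) (rhs_T2 Rr (x s)) (rhs_eta eps (x s))
     + 2 * (eta_of (x s) - es) * rhs_eta eps (x s)).
Proof.
  intros Hsol Hs. destruct (solution_derive Rr eps x Tm s Hsol Hs) as [D0 [D2 De]].
  apply is_derive_Rplus; [apply is_derive_off_slow|apply is_derive_eta_dev_sq]; auto.
Qed.

(* Barrier argument for [exp (k t) V]: while [V < dl^2] the solution lies in the window where
   the rate estimate gives [V' <= - k V]. *)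
Lemma lyapunov_V_decay Rr eps es x Tm : 0 < Rr -> 0 < eps -> eps * Cc * (2 * Rr) <= 1 ->
  82/100 < es < 86/100 -> h_slow es = 0 -> is_solution_on Rr eps x Tm ->
  lyapunov_V es (x 0) < (Rmin (es - 82/100) (86/100 - es)) ^ 2 ->
  forall t, 0 <= t < Tm -> exp (Rmin (2 / Rr) (15 * eps) * t) * lyapunov_V es (x t) <= lyapunov_V es (x 0).
Proof.
  intros HR He Hsmall Hes Hroot Hsol HV0 t Ht.
  pose proof (Rmin_l (es - 82/100) (86/100 - es)). pose proof (Rmin_r (es - 82/100) (86/100 - es)).
  assert (Hdl : 0 < Rmin (es - 82/100) (86/100 - es)) by (apply Rmin_pos; lra).
  set (dl := Rmin (es - 82/100) (86/100 - es)) in *.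
  pose proof (Rmin_l (2 / Rr) (15 * eps)). pose proof (Rmin_r (2 / Rr) (15 * eps)).
  set (k := Rmin (2 / Rr) (15 * eps)) in *.
  assert (Hk : 0 < k) by (apply Rmin_pos; [apply Rdiv_lt_0_compat|]; lra).
  destruct (solution_right_continuous Rr eps x Tm Hsol ltac:(lra)) as [R0 [R2 Re]].
  set (f := fun s => exp (k * s) * lyapunov_V es (x s)).
  assert (Hf0 : f 0 = lyapunov_V es (x 0)) by (unfold f; rewrite Rmult_0_r, exp_0; ring).
  rewrite <- Hf0.
  apply (le_init_of_derive_nonpos_below f
    (fun s => exp (k * s) * (k * lyapunov_V es (x s)
       + (off_slow_rate (x s) (rhs_T0 Rr (x s)) (rhs_T2 Rr (x s)) (rhs_eta eps (x s))
          + 2 * (eta_of (x s) - es) * rhs_eta eps (x s)))) Tm (dl ^ 2)); auto.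
  - intros s Hs. apply is_derive_exp_scal_mult. eapply is_derive_lyapunov_V_solution; eauto.
  - intros s Hs Hfs.
    pose proof (exp_pos (k * s)). pose proof (exp_ineq1_le (k * s)).
    pose proof (lyapunov_V_ge0 es (x s)). pose proof (off_slow_ge0 (x s)).
    pose proof (pow2_ge_0 (eta_of (x s) - es)).
    assert (Hex : 1 <= exp (k * s)) by (assert (0 <= k * s) by (apply Rmult_le_pos; lra); lra).
    assert (HVs : lyapunov_V es (x s) < dl ^ 2) by (unfold f in Hfs; nra).
    assert (Hw : Rabs (eta_of (x s) - es) < dl) by (apply Rabs_def1; unfold lyapunov_V in HVs; nra).
    apply Rabs_def2 in Hw.
    pose proof (lyapunov_V_rate Rr eps es (x s) HR He Hsmall Hes Hroot ltac:(lra)).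
    assert (k * lyapunov_V es (x s) <= (2 / Rr) * off_slow (x s) + 15 * eps * (eta_of (x s) - es) ^ 2).
    { unfold lyapunov_V. rewrite Rmult_plus_distr_l.
      apply Rplus_le_compat; apply Rmult_le_compat_r; lra. }
    apply Rmult_le_0_l; lra.
  - apply right_continuous_at_0_mult.
    + apply right_continuous_at_0_continuous. eapply is_derive_continuity_pt, is_derive_exp_scal.
    + apply right_continuous_at_0_plus; [apply right_continuous_at_0_off_slow|apply right_continuous_at_0_eta_dev_sq]; auto.
  - rewrite Hf0. exact HV0.
Qed.

Section Stability.

Variables (Rr eps es : R).
Hypotheses (HR : 0 < Rr) (Heps : 0 < eps) (Hsmall : eps * Cc * (2 * Rr) <= 1)
  (Hes : 82/100 < es < 86/100) (Hroot : h_slow es = 0).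

Let dl := Rmin (es - 82/100) (86/100 - es).
Let k := Rmin (2 / Rr) (15 * eps).

Lemma window_pos : 0 < dl /\ dl <= 1/10.
Proof. unfold dl. split; [apply Rmin_pos|pose proof (Rmin_l (es - 82/100) (86/100 - es))]; lra. Qed.

Lemma slow_point_lyapunov_stable : lyapunov_stable Rr eps (slow_point es).
Proof.
  intros e He. destruct window_pos as [Hdl Hdl1].
  set (r := Rmin dl (e / 201)).
  assert (Hr0 : 0 < r) by (apply Rmin_pos; lra).
  assert (Hr1 : r <= dl) by apply Rmin_l. assert (Hr2 : r <= e / 201) by apply Rmin_r.
  exists (r / 400). split; [lra|].
  intros x Tm Hsol Hd0 t Ht.
  pose proof (lyapunov_V_lt_of_dist3 (x 0) es (r / 400) ltac:(lra) ltac:(lra) Hd0) as HV0.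
  replace (400 * (r / 400)) with r in HV0 by field.
  assert (HV0' : lyapunov_V es (x 0) < dl ^ 2) by (pose proof (pow_incr r dl 2 ltac:(lra)); lra).
  pose proof (lyapunov_V_decay Rr eps es x Tm HR Heps Hsmall Hes Hroot Hsol HV0' t Ht) as D. fold k in D.
  assert (Hk : 0 < k) by (apply Rmin_pos; [apply Rdiv_lt_0_compat|]; lra).
  pose proof (exp_ineq1_le (k * t)). pose proof (lyapunov_V_ge0 es (x t)).
  assert (0 <= k * t) by (apply Rmult_le_pos; lra).
  assert (HVt : lyapunov_V es (x t) < r ^ 2) by nra.
  pose proof (dist3_slow_point_lt (x t) es r ltac:(lra) ltac:(lra) HVt). lra.
Qed.

Lemma slow_point_attracting : exists d, 0 < d /\
  forall x : R -> state, is_global_solution Rr eps x -> dist3 (x 0) (slow_point es) < d ->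
  forall e, 0 < e -> exists t0, forall t, t0 <= t -> dist3 (x t) (slow_point es) < e.
Proof.
  destruct window_pos as [Hdl Hdl1].
  assert (Hk : 0 < k) by (apply Rmin_pos; [apply Rdiv_lt_0_compat|]; lra).
  exists (dl / 400). split; [lra|].
  intros x Hg Hd0 e He.
  pose proof (lyapunov_V_lt_of_dist3 (x 0) es (dl / 400) ltac:(lra) ltac:(lra) Hd0) as HV0.
  replace (400 * (dl / 400)) with dl in HV0 by field.
  set (rho := Rmin dl (e / 201)).
  assert (Hr0 : 0 < rho) by (apply Rmin_pos; lra).
  assert (Hr1 : rho <= dl) by apply Rmin_l. assert (Hr2 : rho <= e / 201) by apply Rmin_r.
  exists (dl ^ 2 / (k * rho ^ 2)). intros t Ht.
  assert (Ht0 : 0 < dl ^ 2 / (k * rho ^ 2)) by (apply Rdiv_lt_0_compat; [nra|]; apply Rmult_lt_0_compat; nra).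
  pose proof (lyapunov_V_decay Rr eps es x (t + 1) HR Heps Hsmall Hes Hroot (Hg (t + 1) ltac:(lra)) HV0 t
    ltac:(lra)) as D. fold k in D.
  pose proof (exp_ineq1_le (k * t)). pose proof (lyapunov_V_ge0 es (x t)).
  assert (Hkt : dl ^ 2 / rho ^ 2 <= k * t).
  { apply (Rmult_le_compat_l k) in Ht; [|lra].
    replace (k * (dl ^ 2 / (k * rho ^ 2))) with (dl ^ 2 / rho ^ 2) in Ht by (field; split; lra). exact Ht. }
  assert (Hrho2 : 0 < rho ^ 2) by nra.
  assert (Hdr : dl ^ 2 / rho ^ 2 * rho ^ 2 = dl ^ 2) by (field; lra).
  assert (HVt : lyapunov_V es (x t) < rho ^ 2).
  { apply Rnot_le_lt. intro Hc.
    assert (exp (k * t) * lyapunov_V es (x t) >= (dl ^ 2 / rho ^ 2) * rho ^ 2).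
    { apply Rle_ge. apply Rmult_le_compat; try lra. apply Rdiv_le_0_compat; nra. }
    lra. }
  pose proof (dist3_slow_point_lt (x t) es rho ltac:(lra) ltac:(lra) HVt). lra.
Qed.

End Stability.

Lemma slow_point_asymptotically_stable Rr eps es : 0 < Rr -> 0 < eps -> eps * Cc * (2 * Rr) <= 1 ->
  82/100 < es < 86/100 -> h_slow es = 0 -> asymptotically_stable Rr eps (slow_point es).
Proof.
  intros. split; [apply slow_point_lyapunov_stable|apply slow_point_attracting]; auto.
Qed.

(** * Instability of the lower equilibrium *)

Definition clamp (a b x : R) : R := Rmax a (Rmin b x).

Lemma clamp_in a b x : a <= b -> a <= clamp a b x <= b.
Proof. intro. unfold clamp, Rmax, Rmin. repeat destruct Rle_dec; lra. Qed.

Lemma clamp_id a b x : a <= x <= b -> clamp a b x = x.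
Proof. intro. unfold clamp, Rmax, Rmin. repeat destruct Rle_dec; lra. Qed.

Lemma clamp_lipschitz a b x y : a <= b -> Rabs (clamp a b x - clamp a b y) <= Rabs (x - y).
Proof.
  intro. unfold clamp, Rmax, Rmin.
  repeat destruct Rle_dec; apply Rabs_le; pose proof (Rle_abs (x - y)); pose proof (Rle_abs (-(x - y)));
  rewrite Rabs_Ropp in *; split; lra.
Qed.

(* The vector field with [eta] clamped to [0, 1] and [T2] to [-100, 100]: it is globally
   Lipschitz, so Picard iteration produces a global solution, and it coincides with the true
   field near the unstable equilibrium. *)
Definition truncated_field (Rr eps : R) (i : axis) (v : state) : R :=
  match i with
  | axis0 => - (19/10) * (coord axis0 v - phi0 (clamp 0 1 (coord axis2 v))) / Rr
  | axis1 => - 4 * (coord axis1 v - phi2 (clamp 0 1 (coord axis2 v))) / Rr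
  | axis2 => eps * (coord axis0 v + clamp (-100) 100 (coord axis1 v) * p2 (clamp 0 1 (coord axis2 v)) - Tc)
  end.

Lemma relaxation_lipschitz (g : R -> R) (c Rr a a' e e' : R) : 0 < Rr -> 0 <= c ->
  (forall x y, 0 <= x <= 1 -> 0 <= y <= 1 -> Rabs (g x - g y) <= 200 * Rabs (x - y)) ->
  Rabs (- c * (a - g (clamp 0 1 e)) / Rr - - c * (a' - g (clamp 0 1 e')) / Rr)
  <= c / Rr * (Rabs (a - a') + 200 * Rabs (e - e')).
Proof.
  intros HR Hc Hg.
  pose proof (Hg _ _ (clamp_in 0 1 e ltac:(lra)) (clamp_in 0 1 e' ltac:(lra))) as Hge.
  pose proof (clamp_lipschitz 0 1 e e' ltac:(lra)).
  replace (- c * (a - g (clamp 0 1 e)) / Rr - - c * (a' - g (clamp 0 1 e')) / Rr)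
    with (c / Rr * ((g (clamp 0 1 e) - g (clamp 0 1 e')) - (a - a'))) by (field; lra).
  rewrite Rabs_mult, (Rabs_pos_eq (c / Rr)) by (apply Rdiv_le_0_compat; lra).
  apply Rmult_le_compat_l; [apply Rdiv_le_0_compat; lra|].
  eapply Rle_trans; [apply Rabs_triang|]. rewrite Rabs_Ropp. lra.
Qed.

Lemma truncated_eta_lipschitz Rr eps u v : 0 < eps ->
  Rabs (truncated_field Rr eps axis2 u - truncated_field Rr eps axis2 v) <= 301 * eps * l1_dist u v.
Proof.
  intros He. unfold l1_dist. cbn [truncated_field].
  set (a0 := Rabs (coord axis0 u - coord axis0 v)). set (a1 := Rabs (coord axis1 u - coord axis1 v)).
  set (a2 := Rabs (coord axis2 u - coord axis2 v)).
  set (cu := clamp (-100) 100 (coord axis1 u)). set (cv := clamp (-100) 100 (coord axis1 v)).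
  set (pu := p2 (clamp 0 1 (coord axis2 u))). set (pv := p2 (clamp 0 1 (coord axis2 v))).
  assert (Hcv : Rabs cv <= 100) by (apply Rabs_le, clamp_in; lra).
  assert (Hcl : Rabs (cu - cv) <= a1) by (apply clamp_lipschitz; lra).
  assert (Hpu : Rabs pu <= 1) by (apply p2_bound, clamp_in; lra).
  assert (Hpl : Rabs (pu - pv) <= 3 * a2).
  { eapply Rle_trans; [apply p2_lipschitz; apply clamp_in; lra|].
    pose proof (clamp_lipschitz 0 1 (coord axis2 u) (coord axis2 v) ltac:(lra)). unfold a2. lra. }
  replace (eps * (coord axis0 u + cu * pu - Tc) - eps * (coord axis0 v + cv * pv - Tc))
    with (eps * ((coord axis0 u - coord axis0 v) + ((cu - cv) * pu + cv * (pu - pv)))) by ring.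
  rewrite Rabs_mult, (Rabs_pos_eq eps) by lra.
  assert (Rabs ((coord axis0 u - coord axis0 v) + ((cu - cv) * pu + cv * (pu - pv))) <= a0 + a1 + 300 * a2).
  { eapply Rle_trans; [apply Rabs_triang|]. eapply Rle_trans; [apply Rplus_le_compat_l, Rabs_triang|].
    rewrite !Rabs_mult. fold a0.
    pose proof (Rabs_pos (cu - cv)). pose proof (Rabs_pos cv). pose proof (Rabs_pos (pu - pv)).
    pose proof (Rabs_pos pu). nra. }
  assert (0 <= a0) by apply Rabs_pos. assert (0 <= a1) by apply Rabs_pos. assert (0 <= a2) by apply Rabs_pos.
  nra.
Qed.

Lemma truncated_field_lipschitz Rr eps : 0 < Rr -> 0 < eps ->
  lipschitz (truncated_field Rr eps) (201 * (19/10 + 4) / Rr + 301 * eps).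
Proof.
  intros HR He i u v.
  pose proof (truncated_eta_lipschitz Rr eps u v He) as L2.
  pose proof (relaxation_lipschitz phi0 (19/10) Rr (coord axis0 u) (coord axis0 v) (coord axis2 u)
    (coord axis2 v) HR ltac:(lra) phi0_lipschitz) as L0.
  pose proof (relaxation_lipschitz phi2 4 Rr (coord axis1 u) (coord axis1 v) (coord axis2 u)
    (coord axis2 v) HR ltac:(lra) phi2_lipschitz) as L1.
  unfold l1_dist in *.
  set (a0 := Rabs (coord axis0 u - coord axis0 v)) in *. set (a1 := Rabs (coord axis1 u - coord axis1 v)) in *.
  set (a2 := Rabs (coord axis2 u - coord axis2 v)) in *.
  assert (0 <= a0) by apply Rabs_pos. assert (0 <= a1) by apply Rabs_pos. assert (0 <= a2) by apply Rabs_pos.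
  assert (Hc : forall c, 0 <= c -> 0 <= 201 * c / Rr * (a0 + a1 + a2)
    /\ c / Rr * (a0 + a1 + 200 * a2) <= 201 * c / Rr * (a0 + a1 + a2)).
  { intros c Hc. assert (0 <= c / Rr) by (apply Rdiv_le_0_compat; lra).
    replace (201 * c / Rr * (a0 + a1 + a2)) with (c / Rr * (201 * (a0 + a1 + a2))) by (field; lra).
    split; [apply Rmult_le_pos|apply Rmult_le_compat_l]; lra. }
  destruct (Hc (19/10) ltac:(lra)). destruct (Hc 4 ltac:(lra)).
  assert (0 <= 19/10 / Rr) by (apply Rdiv_le_0_compat; lra). assert (0 <= 4 / Rr) by (apply Rdiv_le_0_compat; lra).
  assert (0 <= 301 * eps * (a0 + a1 + a2)) by (apply Rmult_le_pos; lra).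
  replace (201 * (19/10 + 4) / Rr) with (201 * (19/10) / Rr + 201 * 4 / Rr) by (field; lra).
  destruct i; cbn [truncated_field].
  - eapply Rle_trans; [exact L0|].
    assert (19/10 / Rr * (a0 + 200 * a2) <= 19/10 / Rr * (a0 + a1 + 200 * a2)) by (apply Rmult_le_compat_l; lra).
    lra.
  - eapply Rle_trans; [exact L1|].
    assert (4 / Rr * (a1 + 200 * a2) <= 4 / Rr * (a0 + a1 + 200 * a2)) by (apply Rmult_le_compat_l; lra).
    lra.
  - cbn [truncated_field] in L2. lra.
Qed.

Lemma truncated_field_agrees Rr eps v : 0 < Rr -> 0 <= eta_of v <= 1 -> Rabs (T2_of v) <= 100 ->
  truncated_field Rr eps axis0 v = rhs_T0 Rr v /\ truncated_field Rr eps axis1 v = rhs_T2 Rr v /\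
  truncated_field Rr eps axis2 v = rhs_eta eps v.
Proof.
  intros HR He H2. apply Rabs_le_between in H2.
  rewrite rhs_T0_slow, rhs_T2_slow by lra. simpl.
  rewrite !(clamp_id 0 1) by auto. rewrite (clamp_id (-100) 100) by lra.
  repeat split.
Qed.

Section Instability.

Variables (Rr eps es w0 : R).

Let dl := Rmin (es - 19/100) (23/100 - es).
Let lam := 85 * eps.

Hypotheses (HR : 0 < Rr) (Heps : 0 < eps) (Hsmall : eps * Cc * (2 * Rr) <= 1)
  (Hes : 19/100 < es < 23/100) (Hroot : h_slow es = 0) (Hw0 : 0 < w0 <= dl / 4).

Let y := picard_limit (truncated_field Rr eps) (slow_point (es + w0)).

Lemma window_bounds : 0 < dl /\ dl <= es - 19/100 /\ dl <= 23/100 - es.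
Proof.
  unfold dl. pose proof (Rmin_l (es - 19/100) (23/100 - es)). pose proof (Rmin_r (es - 19/100) (23/100 - es)).
  repeat split; auto. apply Rmin_pos; lra.
Qed.

Lemma truncated_field_lipschitz_constant : 0 <= 201 * (19/10 + 4) / Rr + 301 * eps.
Proof. assert (0 < 201 * (19/10 + 4) / Rr) by (apply Rdiv_lt_0_compat; lra). lra. Qed.

Lemma y_derive t i : 0 < t -> is_derive (fun s => coord i (y s)) t (truncated_field Rr eps i (y t)).
Proof.
  apply (picard_limit_derive _ _ _ truncated_field_lipschitz_constant (truncated_field_lipschitz Rr eps HR Heps)).
Qed.

Lemma y_continuity_pt t i : 0 < t -> continuity_pt (fun s => coord i (y s)) t.
Proof. intros Ht. eapply is_derive_continuity_pt, y_derive, Ht. Qed.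

Lemma y_right_continuous i : right_continuous_at_0 (fun s => coord i (y s)).
Proof.
  intros e He.
  destruct (picard_limit_right_continuous _ _ (slow_point (es + w0)) truncated_field_lipschitz_constant
    (truncated_field_lipschitz Rr eps HR Heps) e He) as [d [Hd H]].
  exists d. split; auto. intros t Ht. fold y in H. unfold y at 2. rewrite picard_limit_at_0. apply H, Ht.
Qed.

Lemma chetaev_P_y_0 : chetaev_P es (y 0) = w0 ^ 2.
Proof.
  unfold y. rewrite picard_limit_at_0.
  unfold chetaev_P, off_slow, dev0, dev2, slow_point, T0_of, T2_of, eta_of; simpl. ring.
Qed.

Lemma y_in_window t : Rabs (eta_of (y t) - es) < dl -> 0 < chetaev_P es (y t) ->
  19/100 <= eta_of (y t) <= 23/100 /\ Rabs (T2_of (y t)) <= 100.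
Proof.
  intros Hw HP. destruct window_bounds as [Hdl [Hdl1 Hdl2]].
  apply Rabs_def2 in Hw as Hw'.
  split; [lra|].
  unfold chetaev_P, off_slow in HP.
  pose proof (pow2_ge_0 (dev0 (y t))).
  assert (Hw2 : (eta_of (y t) - es) ^ 2 < dl ^ 2) by (apply Rabs_def2 in Hw; nra).
  assert (Hd2 : Rabs (dev2 (y t)) < dl) by (apply Rabs_def1; nra).
  pose proof (phi2_bound (eta_of (y t)) ltac:(lra)).
  unfold dev2 in Hd2.
  replace (T2_of (y t)) with ((T2_of (y t) - phi2 (eta_of (y t))) + phi2 (eta_of (y t))) by ring.
  eapply Rle_trans; [apply Rabs_triang|]. lra.
Qed.

Lemma y_derive_in_window t : 0 < t -> Rabs (eta_of (y t) - es) < dl -> 0 < chetaev_P es (y t) ->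
  is_derive (fun s => T0_of (y s)) t (rhs_T0 Rr (y t)) /\
  is_derive (fun s => T2_of (y s)) t (rhs_T2 Rr (y t)) /\
  is_derive (fun s => eta_of (y s)) t (rhs_eta eps (y t)).
Proof.
  intros Ht Hw HP. destruct (y_in_window t Hw HP) as [Hin HT2].
  destruct (truncated_field_agrees Rr eps (y t) HR ltac:(lra) HT2) as [E0 [E1 E2]].
  rewrite <- E0, <- E1, <- E2.
  split; [|split]; [apply (y_derive t axis0)|apply (y_derive t axis1)|apply (y_derive t axis2)]; exact Ht.
Qed.

Lemma right_continuous_at_0_chetaev_P_y : right_continuous_at_0 (fun s => chetaev_P es (y s)).
Proof.
  unfold chetaev_P. apply right_continuous_at_0_minus;
    [apply right_continuous_at_0_eta_dev_sq|apply right_continuous_at_0_off_slow];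
    try apply (y_right_continuous axis0); try apply (y_right_continuous axis1); apply (y_right_continuous axis2).
Qed.

Lemma is_derive_chetaev_P_y s : 0 < s ->
  is_derive (fun u => chetaev_P es (y u)) s
    (2 * (eta_of (y s) - es) * truncated_field Rr eps axis2 (y s)
     - off_slow_rate (y s) (truncated_field Rr eps axis0 (y s)) (truncated_field Rr eps axis1 (y s))
         (truncated_field Rr eps axis2 (y s))).
Proof.
  intros Hs. unfold chetaev_P.
  apply is_derive_Rminus; [apply is_derive_eta_dev_sq|apply is_derive_off_slow];
    try apply (y_derive s axis0 Hs); try apply (y_derive s axis1 Hs); apply (y_derive s axis2 Hs).
Qed.

(* Barrier argument for [- exp (- lam t) P (y t)]: while the solution stays in the window and
   [P > 0], the rate estimate gives [P' >= 85 eps w^2 >= lam P]. *)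
Lemma chetaev_growth T : (forall t, 0 <= t < T -> Rabs (eta_of (y t) - es) < dl) ->
  forall t, 0 <= t < T -> w0 ^ 2 <= exp (- lam * t) * chetaev_P es (y t).
Proof.
  intros HT t Ht.
  set (P := fun s => chetaev_P es (y s)).
  set (dP := fun s => 2 * (eta_of (y s) - es) * truncated_field Rr eps axis2 (y s)
     - off_slow_rate (y s) (truncated_field Rr eps axis0 (y s)) (truncated_field Rr eps axis1 (y s))
         (truncated_field Rr eps axis2 (y s))).
  set (f := fun s => 0 - exp (- lam * s) * P s).
  assert (Hf0 : f 0 = - w0 ^ 2) by (unfold f, P; rewrite Rmult_0_r, exp_0, chetaev_P_y_0; ring).
  assert (Hft : f t <= f 0).
  { apply (le_init_of_derive_nonpos_below f (fun s => 0 - exp (- lam * s) * (- lam * P s + dP s)) T 0).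
    - intros s Hs. apply is_derive_Rminus; [apply is_derive_Rconst|].
      apply is_derive_exp_scal_mult, is_derive_chetaev_P_y. lra.
    - intros s Hs Hfs.
      assert (Hex : 0 < exp (- lam * s)) by apply exp_pos.
      assert (HPs : 0 < P s) by (unfold f in Hfs; nra).
      destruct (y_in_window s (HT s ltac:(lra)) HPs) as [Hin HT2].
      destruct (truncated_field_agrees Rr eps (y s) HR ltac:(lra) HT2) as [E0 [E1 E2]].
      pose proof (chetaev_P_rate Rr eps es (y s) HR Heps Hsmall Hes Hroot Hin).
      assert (P s <= (eta_of (y s) - es) ^ 2) by (unfold P, chetaev_P; pose proof (off_slow_ge0 (y s)); lra).
      assert (lam * P s <= 85 * eps * (eta_of (y s) - es) ^ 2) by (unfold lam; nra).
      assert (0 <= exp (- lam * s) * (- lam * P s + dP s)) by (apply Rmult_le_pos; unfold dP; rewrite ?E0, ?E1, ?E2; lra).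
      lra.
    - unfold f. apply right_continuous_at_0_minus; [apply right_continuous_at_0_const|].
      apply right_continuous_at_0_mult; [|apply right_continuous_at_0_chetaev_P_y].
      apply right_continuous_at_0_continuous. eapply is_derive_continuity_pt, is_derive_exp_scal.
    - rewrite Hf0. nra.
    - exact Ht. }
  rewrite Hf0 in Hft. unfold f, P in Hft. lra.
Qed.

Lemma y_leaves_window : exists t1, 0 <= t1 /\ dl <= Rabs (eta_of (y t1) - es).
Proof.
  destruct window_bounds as [Hdl _].
  apply NNPP. intro Hn.
  assert (Hall : forall t, 0 <= t -> Rabs (eta_of (y t) - es) < dl).
  { intros t Ht. apply Rnot_le_lt. intro Hc. apply Hn. exists t. auto. }
  assert (Hlam : 0 < lam) by (unfold lam; lra).
  set (Ts := dl ^ 2 / (lam * w0 ^ 2)).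
  assert (Hw2 : 0 < w0 ^ 2) by nra.
  assert (HTs : 0 < Ts) by (unfold Ts; apply Rdiv_lt_0_compat; [nra|]; apply Rmult_lt_0_compat; lra).
  pose proof (chetaev_growth (Ts + 1) (fun t Ht => Hall t (proj1 Ht)) Ts ltac:(lra)) as Hg.
  assert (Hm : exp (lam * Ts) * (exp (- lam * Ts) * chetaev_P es (y Ts)) = chetaev_P es (y Ts)).
  { rewrite <- Rmult_assoc, <- exp_plus. replace (lam * Ts + - lam * Ts) with 0 by ring. rewrite exp_0; ring. }
  assert (H1 : exp (lam * Ts) * w0 ^ 2 <= chetaev_P es (y Ts))
    by (rewrite <- Hm; apply Rmult_le_compat_l; [left; apply exp_pos|exact Hg]).
  pose proof (exp_ineq1_le (lam * Ts)) as H2.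
  assert (H3 : w0 ^ 2 * (lam * Ts) = dl ^ 2) by (unfold Ts; field; lra).
  assert (HPle : chetaev_P es (y Ts) <= (eta_of (y Ts) - es) ^ 2)
    by (unfold chetaev_P; pose proof (off_slow_ge0 (y Ts)); lra).
  pose proof (Hall Ts ltac:(lra)) as H4. apply Rabs_def2 in H4.
  assert ((eta_of (y Ts) - es) ^ 2 < dl ^ 2) by nra.
  nra.
Qed.

Lemma y_first_exit : exists t2, 0 < t2 /\ Rabs (eta_of (y t2) - es) = dl /\
  forall s, 0 <= s < t2 -> Rabs (eta_of (y s) - es) < dl.
Proof.
  destruct window_bounds as [Hdl [Hdl1 Hdl2]].
  destruct y_leaves_window as [t1 [Ht1 Hge]].
  set (g := fun t => Rabs (eta_of (y t) - es)).
  assert (Hg0 : g 0 = w0).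
  { unfold g, y. rewrite picard_limit_at_0. unfold slow_point, eta_of; simpl.
    replace (es + w0 - es) with w0 by ring. apply Rabs_pos_eq; lra. }
  assert (Ht1p : 0 < t1) by (destruct (Req_dec t1 0) as [->|]; [fold (g 0) in Hge; lra|lra]).
  destruct (first_crossing g t1 dl Ht1p) as [t2 [Ht2 [Hgt2 Hbef]]]; [| |lra|exact Hge|].
  - intros t Ht. apply (continuity_pt_comp (fun s => eta_of (y s) - es) Rabs); [|apply Rcontinuity_abs].
    apply continuity_pt_minus; [apply (y_continuity_pt t axis2); lra|apply continuity_pt_const; intros a b; reflexivity].
  - apply (right_continuous_at_0_comp Rabs (fun t => eta_of (y t) - es)); [apply Rcontinuity_abs|].
    apply right_continuous_at_0_minus; [apply (y_right_continuous axis2)|apply right_continuous_at_0_const].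
  - exists t2. split; [lra|auto].
Qed.

Lemma y_solution_before_exit t2 : (forall s, 0 <= s < t2 -> Rabs (eta_of (y s) - es) < dl) ->
  is_solution_on Rr eps y t2.
Proof.
  intros Hbef. split.
  - intros t Ht.
    assert (HP : 0 < chetaev_P es (y t)).
    { pose proof (chetaev_growth t2 Hbef t ltac:(lra)). pose proof (exp_pos (- lam * t)).
      assert (0 < w0 ^ 2) by nra. nra. }
    destruct (y_derive_in_window t ltac:(lra) (Hbef t ltac:(lra)) HP) as [D0 [D1 D2]].
    split; [|split]; apply is_derive_Reals; assumption.
  - intros e He.
    destruct (picard_limit_right_continuous _ _ (slow_point (es + w0)) truncated_field_lipschitz_constant
      (truncated_field_lipschitz Rr eps HR Heps) e He) as [d [Hd H]].
    exists d. split; auto. intros t Ht _. fold y in H.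
    unfold y at 2. rewrite picard_limit_at_0. apply dist3_lt_iff.
    split; [|split]; [apply (H t Ht axis0)|apply (H t Ht axis1)|apply (H t Ht axis2)].
Qed.

End Instability.

Lemma slow_point_unstable Rr eps es : 0 < Rr -> 0 < eps -> eps * Cc * (2 * Rr) <= 1 ->
  19/100 < es < 23/100 -> h_slow es = 0 -> unstable Rr eps (slow_point es).
Proof.
  intros HR Heps Hsmall Hes Hroot Hstab.
  destruct (window_bounds es Hes) as [Hdl [Hdl1 Hdl2]].
  set (dl := Rmin (es - 19/100) (23/100 - es)) in *.
  destruct (Hstab (dl / 2) ltac:(lra)) as [d [Hd Hst]].
  set (w0 := Rmin (d / 400) (dl / 4)).
  assert (Hw0 : 0 < w0 <= dl / 4) by (split; [apply Rmin_pos; lra|apply Rmin_r]).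
  assert (Hw0d : w0 <= d / 400) by apply Rmin_l.
  set (y := picard_limit (truncated_field Rr eps) (slow_point (es + w0))).
  destruct (y_first_exit Rr eps es w0 HR Heps Hsmall Hes Hroot Hw0) as [t2 [Ht2 [Hexit Hbef]]].
  fold y in Hexit, Hbef. change (Rmin (es - 19/100) (23/100 - es)) with dl in Hexit, Hbef.
  assert (Hd0 : dist3 (y 0) (slow_point es) < d).
  { unfold y. rewrite picard_limit_at_0.
    eapply Rle_lt_trans; [apply dist3_slow_points; lra|].
    replace (es + w0 - es) with w0 by ring. rewrite Rabs_pos_eq; lra. }
  pose proof (Hst y t2 (y_solution_before_exit Rr eps es w0 HR Heps Hsmall Hes Hroot Hw0 t2 Hbef) Hd0) as Hclose.
  assert (Hc : continuity_pt (fun s => Rabs (eta_of (y s) - es)) t2).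
  { apply (continuity_pt_comp (fun s => eta_of (y s) - es) Rabs); [|apply Rcontinuity_abs].
    apply continuity_pt_minus; [apply (y_continuity_pt Rr eps es w0 HR Heps t2 axis2 Ht2)|].
    apply continuity_pt_const; intros a b; reflexivity. }
  assert (Hle : Rabs (eta_of (y t2) - es) <= dl / 2).
  { apply (le_of_continuity_pt_left (fun s => Rabs (eta_of (y s) - es))); auto. intros s Hs.
    apply (proj2 (proj2 (proj1 (dist3_lt_iff _ _ _) (Hclose s Hs)))). }
  lra.
Qed.

Theorem proposition1 :
  forall Rr : R, 0 < Rr ->
  exists eps0 : R, 0 < eps0 /\
  forall eps : R, 0 < eps < eps0 ->
  exists e1 e2 : state,
    is_equilibrium Rr eps e1 /\ is_equilibrium Rr eps e2 /\
    0 <= eta_of e1 /\ eta_of e1 < eta_of e2 /\ eta_of e2 <= 1 /\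
    (forall x : state, is_equilibrium Rr eps x ->
       0 <= eta_of x <= 1 -> x = e1 \/ x = e2) /\
    unstable Rr eps e1 /\
    asymptotically_stable Rr eps e2.
Proof.
  intros Rr HR. pose proof Cc_pos.
  exists (1 / (2 * Rr * Cc)). split; [apply Rdiv_lt_0_compat; [lra|apply Rmult_lt_0_compat; lra]|].
  intros eps [Heps Hlt].
  assert (Hsmall : eps * Cc * (2 * Rr) <= 1).
  { apply (Rmult_lt_compat_r (2 * Rr * Cc)) in Hlt; [|apply Rmult_lt_0_compat; lra].
    replace (1 / (2 * Rr * Cc) * (2 * Rr * Cc)) with 1 in Hlt by (field; lra). lra. }
  destruct h_slow_root_low as [e1 [H1 H10]]. destruct h_slow_root_high as [e2 [H2 H20]].
  assert (Heq : forall e, h_slow e = 0 -> is_equilibrium Rr eps (slow_point e))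
    by (intros e He; apply equilibrium_iff; auto).
  exists (slow_point e1), (slow_point e2).
  split; [auto|]. split; [auto|]. simpl. split; [lra|]. split; [lra|]. split; [lra|]. split.
  - intros x Hx Hin. apply equilibrium_iff in Hx as [Ex Hroot]; auto.
    rewrite Ex. destruct (h_slow_roots_unique e1 e2 H1 H10 H2 H20 (eta_of x) Hin Hroot) as [E|E]; rewrite E; auto.
  - split; [apply slow_point_unstable|apply slow_point_asymptotically_stable]; auto.
Qed.
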